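(* Let $B>0$, $T\ge 2$, and let $\mathcal F$ be the set of all $1$-Lipschitz functions from $[0,1]$ to $[-B,B]$. Let $(x_t)$ be any sequence in $[0,1]$ and $(y_t)$ any real sequence with $\max_{1\le t\le T}|y_t|\le B$. Then the Dyadic Chaining Algorithm (described in the context) tuned with $\gamma=BT^{-1/3}$ and $M=\lceil\log_2(\gamma T/B)\rceil$ satisfies, for some absolute constant $c>0$, $$\sum_{t=1}^T(y_t-\hat y_t)^2-\inf_{f\in\mathcal F}\sum_{t=1}^T(y_t-f(x_t))^2\le c\max\{B,B^2\}\,T^{1/3}\log T.$$
   Context: Online protocol: at round $t$, $x_t$ is revealed, the forecaster predicts $\hat y_t$, then $y_t$ is revealed. Adaptive Multi-variable Exponentiated Gradient (AMEG) on $\Delta_{N_1}\times\cdots\times\Delta_{N_K}$ ($\Delta_N$ the probability simplex of $\mathbb R^N$) with gradient bounds $G^{(1)},\ldots,G^{(K)}>0$: start with uniform $\hat{\boldsymbol u}^{(k)}_1$; at each of its rounds $t$ it outputs $(\hat{\boldsymbol u}^{(k)}_t)_k$, receives a differentiable jointly convex loss $\ell_t$, sets $\eta^{(k)}_{t+1}=\frac{1}{G^{(k)}}\sqrt{\log N_k/(1+\sum_{s=1}^t\mathbb 1\{\sup|\nabla_{\boldsymbol u^{(k)}}\ell_s|>0\})}$ (sup of the absolute coordinates of the partial gradient over the whole domain) and $\hat u^{(k)}_{t+1,i}\propto\exp\big(-\eta^{(k)}_{t+1}\sum_{s=1}^t\partial_{u^{(k)}_i}\ell_s(\hat{\boldsymbol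 u}^{(1)}_s,\ldots,\hat{\boldsymbol u}^{(K)}_s)\big)$, normalized over $i$. Dyadic Chaining Algorithm: assume $1/\gamma$ and $2B/\gamma$ are integers. Let $I_a=[(a-1)\gamma,a\gamma)$, $a=1,\ldots,1/\gamma$ (the last one closed at $1$). For $m\ge1$, split $I_a$ into $2^m$ consecutive subintervals $I_a^{(m,n)}$, $n=1,\ldots,2^m$, of length $\gamma/2^m$. For each $a$ run an independent instance $\mathcal A_a$ that is fed only rounds $t$ with $x_t\in I_a$. Inside $\mathcal A_a$, for each $j\in\{0,\ldots,2B/\gamma\}$ run an AMEG instance $\mathcal B_{a,j}$ with blocks indexed by $(m,n)$, $1\le m\le M$, $1\le n\le 2^m$, each block $\boldsymbol u^{(m,n)}\in\Delta_2$, gradient bounds $G^{(m,n)}=16B\gamma/2^m$, and losses $$\ell_t(\boldsymbol u)=\Big(y_t-(-B+j\gamma)-\sum_{m=1}^M\sum_{n=1}^{2^m}\Big(u^{(m,n)}_1\tfrac{-\gamma}{2^{m-1}}+u^{(m,n)}_2\tfrac{\gamma}{2^{m-1}}\Big)\mathbb 1\{x_t\in I_a^{(m,n)}\}\Big)^2.$$ With its current weights $\hat{\boldsymbol u}^{(m,n)}_{t,a,j}$, let $\hat f_{t,a,j}(x)=-B+j\gamma+\sum_{m,n}\big(\hat u^{(m,n)}_{t,a,j,1}\frac{-\gamma}{2^{m-1}}+\hat u^{(m,n)}_{t,a,j,2}\frac{\gamma}{2^{m-1}}\big)\mathbb 1\{x\in I_a^{(m,n)}\}$. Aggregate them by exponential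 weights $\hat w_{t,a,j}\propto\exp\big(-\eta\sum_{s<t,\,x_s\in I_a}(y_s-\hat f_{s,a,j}(x_s))^2\big)$ with $\eta=1/(32B^2)$, giving $\hat f_{t,a}=\sum_j\hat w_{t,a,j}\hat f_{t,a,j}$. The prediction is $\hat y_t=\sum_a\hat f_{t,a}(x_t)\mathbb 1\{x_t\in I_a\}$. *)

From Stdlib Require Import Reals Lra Lia List ClassicalEpsilon.
From Coquelicot Require Import Coquelicot.
Import ListNotations.
Open Scope R_scope.

Definition lsum (l : list nat) (f : nat -> R) : R :=
  fold_right (fun k acc => f k + acc) 0 l.

Definition ind (P : Prop) : R :=
  if excluded_middle_informative P then 1 else 0.

(* A point of the product of simplices: u m n i, block (m,n), coordinate i in {1,2} *)
Definition point := nat -> nat -> nat -> R.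

Definition upd (u : point) (m n i : nat) (v : R) : point :=
  fun m' n' i' =>
    if (Nat.eqb m' m && Nat.eqb n' n && Nat.eqb i' i)%bool then v else u m' n' i'.

Section DyadicChaining.
(* B : range bound; gamma : width of the I_a; M : depth;
   NA = 1/gamma (number of intervals I_a); NJ = 2B/gamma (experts j = 0..NJ);
   x, y : the data sequences (rounds t = 1, 2, ...). *)
Variables (B gamma : R) (M NA NJ : nat) (x y : nat -> R).

Definition inI (a : nat) (z : R) : Prop :=
  ((INR a - 1) * gamma <= z /\ z < INR a * gamma) \/ (a = NA /\ z = 1).

(* z in I_a^{(m,n)}: the n-th of the 2^m consecutive subintervals of I_a of
   length gamma/2^m (half open, the last one inheriting the right end of I_a) *)
Definition inSub (a m n : nat) (z : R) : Prop :=
  inI a z /\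
  (INR a - 1) * gamma + (INR n - 1) * gamma / 2 ^ m <= z /\
  (z < (INR a - 1) * gamma + INR n * gamma / 2 ^ m \/
   (n = (2 ^ m)%nat /\ z = (INR a - 1) * gamma + INR n * gamma / 2 ^ m)).

Definition fpar (j : nat) (u : point) (a : nat) (z : R) : R :=
  - B + INR j * gamma +
  lsum (seq 1 M) (fun m => lsum (seq 1 (2 ^ m)) (fun n =>
     (u m n 1%nat * (- gamma / 2 ^ (m - 1)) + u m n 2%nat * (gamma / 2 ^ (m - 1)))
     * ind (inSub a m n z))).

Definition loss (a j t : nat) (u : point) : R := (y t - fpar j u a (x t)) ^ 2.

Definition partial (a j t : nat) (u : point) (m n i : nat) : R :=
  Derive (fun v => loss a j t (upd u m n i v)) (u m n i).

Definition Dom (u : point) : Prop :=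
  forall m n, (1 <= m <= M)%nat -> (1 <= n <= 2 ^ m)%nat ->
    0 <= u m n 1%nat /\ 0 <= u m n 2%nat /\ u m n 1%nat + u m n 2%nat = 1.

(* sup over the domain of |partial_{u^{(m,n)}} l_t| is > 0 *)
Definition active (a j t m n : nat) : Prop :=
  exists u, Dom u /\ exists i, (i = 1 \/ i = 2)%nat /\ partial a j t u m n i <> 0.

Definition Gbound (m : nat) : R := 16 * B * gamma / 2 ^ m.

(* learning rate of block (m,n) of B_{a,j} used at global round t
   (its rounds are the rounds s < t with x_s in I_a) *)
Definition eta_blk (a j t m n : nat) : R :=
  / Gbound m * sqrt (ln 2 / (1 + lsum (seq 1 (t - 1))
                      (fun s => ind (inI a (x s) /\ active a j s m n)))).

Definition wts (a j t : nat) (C : point) : point :=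
  fun m n i =>
    exp (- eta_blk a j t m n * C m n i) /
    (exp (- eta_blk a j t m n * C m n 1%nat) + exp (- eta_blk a j t m n * C m n 2%nat)).

Fixpoint cumgrad (a j t : nat) : point :=
  match t with
  | O => fun _ _ _ => 0
  | S t' =>
      let C := cumgrad a j t' in
      let u := wts a j t' C in
      fun m n i =>
        C m n i +
        (if excluded_middle_informative ((1 <= t')%nat /\ inI a (x t'))
         then partial a j t' u m n i else 0)
  end.

Definition uhat (a j t : nat) : point := wts a j t (cumgrad a j t).

Definition fhat (a j t : nat) (z : R) : R := fpar j (uhat a j t) a z.

Definition eta_agg : R := 1 / (32 * B ^ 2).

Definition cumloss (a j t : nat) : R :=
  lsum (seq 1 (t - 1)) (fun s => ind (inI a (x s)) * (y s - fhat a j s (x s)) ^ 2).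

Definition what (a j t : nat) : R :=
  exp (- eta_agg * cumloss a j t) /
  lsum (seq 0 (NJ + 1)) (fun j' => exp (- eta_agg * cumloss a j' t)).

Definition fhat_a (a t : nat) (z : R) : R :=
  lsum (seq 0 (NJ + 1)) (fun j => what a j t * fhat a j t z).

Definition yhat (t : nat) : R :=
  lsum (seq 1 NA) (fun a => fhat_a a t (x t) * ind (inI a (x t))).

End DyadicChaining.

(* The regret splits over the intervals [I_a], since each [x_t] lies in exactly one of them.
   On [I_a], exponential weights over the offsets [j] lose at most [32 B^2 ln (NJ + 1)] to the best
   one, the square loss being exp-concave for [eta = 1 / (32 B^2)] on residuals of size [4 B].
   Each AMEG instance splits into independent two-expert exponentiated-gradient learners, one per
   dyadic block, whose weight gap is [- tanh (eta C)]; a [ln cosh] potential with the adaptive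
   rates bounds its regret against any fixed point by [32 B gamma M (1 + sqrt T_a)].  The fixed
   point is a chaining approximation of [f]: starting from the offset closest to [f] at the center
   of [I_a], level [m] adds the increment of [f] between centers of nested subintervals, which the
   Lipschitz bound keeps below the jump [gamma / 2^(m-1)]; after [M] levels the approximation error
   is at most [gamma 2^(-M-1) <= B / (2 T)].  With [gamma = B T^(-1/3)] and [M ~ (2/3) log2 T] the
   [1 / gamma] intervals contribute [O (max (B, B^2) T^(1/3) log T)]. *)

From Pilot Require Import Defs.
From Stdlib Require Import Reals Lra Lia List ClassicalEpsilon.
From Coquelicot Require Import Coquelicot.
Import ListNotations.
Open Scope R_scope.

(* Coquelicot also exports an [ind]. *)
Local Notation ind := Defs.ind.

(** * Finite sums *)

Lemma lsum_cons k l f : lsum (k :: l) f = f k + lsum l f.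
Proof. reflexivity. Qed.

Lemma lsum_app l1 l2 f : lsum (l1 ++ l2) f = lsum l1 f + lsum l2 f.
Proof. induction l1; simpl; [ring | rewrite IHl1; ring]. Qed.

Lemma lsum_ext l f g : (forall k, In k l -> f k = g k) -> lsum l f = lsum l g.
Proof. induction l; simpl; intros H; auto. rewrite H, IHl; auto. Qed.

Lemma lsum_le l f g : (forall k, In k l -> f k <= g k) -> lsum l f <= lsum l g.
Proof.
  induction l; simpl; intros H; [lra |].
  pose proof (H a (or_introl eq_refl)). pose proof (IHl (fun k h => H k (or_intror h))). lra.
Qed.

Lemma lsum_add l f g : lsum l (fun k => f k + g k) = lsum l f + lsum l g.
Proof. induction l; simpl; [ring | rewrite IHl; ring]. Qed.

Lemma lsum_sub l f g : lsum l (fun k => f k - g k) = lsum l f - lsum l g.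
Proof. induction l; simpl; [ring | rewrite IHl; ring]. Qed.

Lemma lsum_scal_l l c f : lsum l (fun k => c * f k) = c * lsum l f.
Proof. induction l; simpl; [ring | rewrite IHl; ring]. Qed.

Lemma lsum_scal_r l c f : lsum l (fun k => f k * c) = lsum l f * c.
Proof. induction l; simpl; [ring | rewrite IHl; ring]. Qed.

Lemma lsum_eq0 l f : (forall k, In k l -> f k = 0) -> lsum l f = 0.
Proof. induction l; simpl; intros H; auto. rewrite H, IHl; auto; ring. Qed.

Lemma lsum_ge0 l f : (forall k, In k l -> 0 <= f k) -> 0 <= lsum l f.
Proof. intros H. rewrite <- (lsum_eq0 l (fun _ => 0)) by auto. now apply lsum_le. Qed.

Lemma lsum_const l c : lsum l (fun _ => c) = INR (length l) * c.
Proof. induction l; [simpl; ring |]. rewrite lsum_cons, IHl. simpl length. rewrite S_INR. ring. Qed.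

Lemma lsum_comm l1 l2 (F : nat -> nat -> R) :
  lsum l1 (fun i => lsum l2 (fun j => F i j)) = lsum l2 (fun j => lsum l1 (fun i => F i j)).
Proof.
  induction l1; simpl; [symmetry; now apply lsum_eq0 |].
  rewrite IHl1, <- lsum_add. reflexivity.
Qed.

Lemma lsum_seq_last a n f : lsum (seq a (S n)) f = lsum (seq a n) f + f (a + n)%nat.
Proof. rewrite seq_S, lsum_app. simpl. ring. Qed.

Lemma lsum_single l f k0 : NoDup l -> In k0 l ->
  (forall k, In k l -> k <> k0 -> f k = 0) -> lsum l f = f k0.
Proof.
  induction l as [|a l IH]; simpl; intros Hnd Hin H; [contradiction |].
  inversion Hnd; subst. destruct Hin as [<- | Hin].
  - rewrite lsum_eq0; [ring |]. intros k Hk. apply H; auto. intros ->. contradiction.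
  - assert (a <> k0) by (intros ->; contradiction).
    rewrite H, IH; auto; ring.
Qed.

Lemma lsum_seq_single a n f k0 : (a <= k0 < a + n)%nat ->
  (forall k, (a <= k < a + n)%nat -> k <> k0 -> f k = 0) -> lsum (seq a n) f = f k0.
Proof.
  intros Hk0 H. apply lsum_single; [apply seq_NoDup | apply in_seq; lia |].
  intros k Hk. apply H. now apply in_seq.
Qed.

Lemma lsum_term_le l f k : In k l -> (forall i, In i l -> 0 <= f i) -> f k <= lsum l f.
Proof.
  induction l; simpl; intros Hk Hpos; [contradiction |].
  destruct Hk as [<- | Hk].
  - assert (0 <= lsum l f) by (apply lsum_ge0; auto). lra.
  - assert (0 <= f a) by auto. pose proof (IHl Hk (fun i Hi => Hpos i (or_intror Hi))). lra.
Qed.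

Lemma Rabs_lsum_le l f : Rabs (lsum l f) <= lsum l (fun k => Rabs (f k)).
Proof.
  induction l; simpl; [rewrite Rabs_R0; lra |].
  eapply Rle_trans; [apply Rabs_triang | lra].
Qed.

Lemma lsum_Cauchy_Schwarz l f : (lsum l f) ^ 2 <= INR (length l) * lsum l (fun k => f k ^ 2).
Proof.
  induction l as [|a l IH]; [simpl; lra |]. rewrite !lsum_cons. simpl length. rewrite S_INR.
  set (A := lsum l f) in *. set (S := lsum l (fun k => f k ^ 2)) in *.
  set (n := INR (length l)) in *.
  assert (0 <= n) by apply pos_INR.
  assert (0 <= S) by (apply lsum_ge0; intros; apply pow2_ge_0).
  destruct (Req_dec n 0) as [Hn | Hn].
  - assert (HA : A = 0) by (rewrite Hn in IH; nra). rewrite HA, Hn. nra.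
  - (* AM-GM: [2 f(a) A <= A^2/n + n f(a)^2], and [A^2/n <= S] by induction. *)
    assert (2 * f a * A <= A ^ 2 / n + n * f a ^ 2).
    { assert (0 <= (A - n * f a) ^ 2 / n) by (apply Rdiv_le_0_compat; [apply pow2_ge_0 | lra]).
      assert ((A - n * f a) ^ 2 / n = A ^ 2 / n - 2 * f a * A + n * f a ^ 2) by (field; lra).
      lra. }
    assert (A ^ 2 / n <= S) by (apply Rle_div_l; nra).
    nra.
Qed.

Lemma lsum_sqrt_le l v : (forall k, In k l -> 0 <= v k) ->
  lsum l (fun k => sqrt (v k)) <= sqrt (INR (length l) * lsum l v).
Proof.
  intros H. apply Rsqr_incr_0_var; [| apply sqrt_pos].
  rewrite Rsqr_sqrt by (apply Rmult_le_pos; [apply pos_INR | now apply lsum_ge0]).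
  rewrite Rsqr_pow2. eapply Rle_trans; [apply lsum_Cauchy_Schwarz |].
  apply Rmult_le_compat_l; [apply pos_INR |].
  apply Req_le, lsum_ext. intros k Hk. rewrite <- Rsqr_pow2, Rsqr_sqrt; auto.
Qed.

Lemma lsum_telescope (g s : nat -> R) n :
  (forall t, (1 <= t <= n)%nat -> s (S t) = s t + g t) ->
  lsum (seq 1 n) g = s (S n) - s 1%nat.
Proof.
  induction n; intros H; [simpl; ring |].
  rewrite lsum_seq_last, IHn by (intros; apply H; lia).
  replace (1 + n)%nat with (S n) by lia. rewrite (H (S n)) by lia. ring.
Qed.

Lemma ind_true (P : Prop) : P -> ind P = 1.
Proof. intros H. unfold ind. destruct excluded_middle_informative; tauto. Qed.

Lemma ind_false (P : Prop) : ~ P -> ind P = 0.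
Proof. intros H. unfold ind. destruct excluded_middle_informative; tauto. Qed.

Lemma ind_0_or_1 (P : Prop) : ind P = 0 \/ ind P = 1.
Proof. unfold ind. destruct excluded_middle_informative; auto. Qed.

Lemma ind_bounds (P : Prop) : 0 <= ind P <= 1.
Proof. destruct (ind_0_or_1 P) as [-> | ->]; lra. Qed.

(** * Tangent inequalities and [ln cosh] *)

Lemma nonincreasing_of_derive_nonpos (g g' : R -> R) lo hi :
  (forall z, lo <= z <= hi -> derivable_pt_lim g z (g' z)) ->
  (forall z, lo <= z <= hi -> g' z <= 0) ->
  forall a b, lo <= a -> a <= b -> b <= hi -> g b <= g a.
Proof.
  intros Hd Hs a b Ha [Hab | ->] Hb; [| lra].
  destruct (MVT_cor2 g g' a b Hab) as [c [Hc Hcab]]; [intros; apply Hd; lra |].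
  assert (g' c <= 0) by (apply Hs; lra). nra.
Qed.

Lemma convex_above_tangent (f f' : R -> R) lo hi :
  (forall z, lo <= z <= hi -> derivable_pt_lim f z (f' z)) ->
  (forall a b, lo <= a -> a <= b -> b <= hi -> f' a <= f' b) ->
  forall m z, lo <= m <= hi -> lo <= z <= hi -> f m + f' m * (z - m) <= f z.
Proof.
  intros Hd Hm m z Hm1 Hz.
  destruct (Rtotal_order m z) as [H | [-> | H]]; [| lra |].
  - destruct (MVT_cor2 f f' m z H) as [c [Hc1 Hc2]]; [intros; apply Hd; lra |].
    assert (f' m <= f' c) by (apply Hm; lra). nra.
  - destruct (MVT_cor2 f f' z m H) as [c [Hc1 Hc2]]; [intros; apply Hd; lra |].
    assert (f' c <= f' m) by (apply Hm; lra). nra.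
Qed.

Lemma concave_below_tangent (f f' : R -> R) lo hi :
  (forall z, lo <= z <= hi -> derivable_pt_lim f z (f' z)) ->
  (forall a b, lo <= a -> a <= b -> b <= hi -> f' b <= f' a) ->
  forall m z, lo <= m <= hi -> lo <= z <= hi -> f z <= f m + f' m * (z - m).
Proof.
  intros Hd Hm m z Hm1 Hz.
  enough (- f m + - f' m * (z - m) <= - f z) by lra.
  apply (convex_above_tangent (fun z => - f z) (fun z => - f' z) lo hi); auto.
  - intros; now apply derivable_pt_lim_opp, Hd.
  - intros a b Ha Hab Hb. pose proof (Hm a b Ha Hab Hb). lra.
Qed.

Lemma cosh_gt0 z : 0 < cosh z.
Proof. unfold cosh. pose proof (exp_pos z). pose proof (exp_pos (- z)). lra. Qed.

Lemma tanh_bounds z : -1 <= tanh z <= 1.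
Proof.
  unfold tanh, sinh. pose proof (cosh_gt0 z). unfold cosh in *.
  pose proof (exp_pos z). pose proof (exp_pos (- z)).
  split; [apply Rle_div_r | apply Rle_div_l]; lra.
Qed.

Lemma derivable_pt_lim_ln_cosh z : derivable_pt_lim (fun z => ln (cosh z)) z (tanh z).
Proof.
  apply is_derive_Reals. pose proof (cosh_gt0 z).
  unfold tanh. auto_derive; [lra | field; lra].
Qed.

Lemma derivable_pt_lim_tanh z : derivable_pt_lim tanh z (1 - tanh z ^ 2).
Proof.
  apply is_derive_Reals. pose proof (cosh_gt0 z).
  unfold tanh. auto_derive; [lra | field; lra].
Qed.

Lemma tanh_le a b : a <= b -> tanh a <= tanh b.
Proof.
  intros Hab. enough (- tanh b <= - tanh a) by lra.
  apply (nonincreasing_of_derive_nonpos (fun z => - tanh z) (fun z => - (1 - tanh z ^ 2)) a b);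
    try lra.
  - intros; apply derivable_pt_lim_opp, derivable_pt_lim_tanh.
  - intros z _. pose proof (tanh_bounds z). nra.
Qed.

Lemma ln_cosh_tangent m z : ln (cosh m) + tanh m * (z - m) <= ln (cosh z).
Proof.
  apply (convex_above_tangent (fun z => ln (cosh z)) tanh (Rmin m z) (Rmax m z)).
  - intros; apply derivable_pt_lim_ln_cosh.
  - intros; now apply tanh_le.
  - split; [apply Rmin_l | apply Rmax_l].
  - split; [apply Rmin_r | apply Rmax_r].
Qed.

Lemma ln_cosh_0 : ln (cosh 0) = 0.
Proof. rewrite cosh_0. apply ln_1. Qed.

Lemma ln_cosh_scale l z : 0 <= l <= 1 -> ln (cosh (l * z)) <= l * ln (cosh z).
Proof.
  intros Hl. pose proof (ln_cosh_tangent (l * z) z). pose proof (ln_cosh_tangent (l * z) 0).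
  rewrite ln_cosh_0 in *. nra.
Qed.

Lemma Rabs_le_ln_cosh z : Rabs z <= ln (cosh z) + ln 2.
Proof.
  rewrite <- ln_mult by (apply cosh_gt0 || lra).
  replace (cosh z * 2) with (exp z + exp (- z)) by (unfold cosh; field).
  pose proof (exp_pos z). pose proof (exp_pos (- z)).
  unfold Rabs; destruct Rcase_abs;
    [rewrite <- (ln_exp (- z)) at 1 | rewrite <- (ln_exp z) at 1]; apply ln_le; lra.
Qed.

(* Since [ln cosh'' = 1 - tanh^2 <= 1], the gap to the quadratic upper model is convex in [b]
   with a minimum at [b = 0]. *)
Lemma ln_cosh_shift_le a b : ln (cosh (a + b)) <= ln (cosh a) + b * tanh a + b ^ 2 / 2.
Proof.
  set (k := fun v => ln (cosh a) + v * tanh a + v ^ 2 / 2 - ln (cosh (a + v))).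
  set (k' := fun v => tanh a + v - tanh (a + v)).
  assert (Hk : forall v, derivable_pt_lim k v (k' v)).
  { intros v. pose proof (cosh_gt0 a). pose proof (cosh_gt0 (a + v)).
    apply is_derive_Reals. unfold k, k', tanh.
    auto_derive; [lra | field; lra]. }
  assert (Hk' : forall v, derivable_pt_lim k' v (tanh (a + v) ^ 2)).
  { intros v. pose proof (cosh_gt0 a). pose proof (cosh_gt0 (a + v)).
    apply is_derive_Reals. unfold k', tanh.
    auto_derive; [lra | field; lra]. }
  assert (Hk0 : k 0 = 0) by (unfold k; cbv beta; replace (a + 0) with a by ring; field).
  assert (Hk'0 : k' 0 = 0) by (unfold k'; cbv beta; replace (a + 0) with a by ring; ring).
  enough (k 0 + k' 0 * (b - 0) <= k b) by (unfold k in *; rewrite Hk0, Hk'0 in *; lra).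
  apply (convex_above_tangent k k' (Rmin 0 b) (Rmax 0 b) (fun z _ => Hk z)).
  - intros p q _ Hpq _. enough (- k' q <= - k' p) by lra.
    apply (nonincreasing_of_derive_nonpos (fun v => - k' v) (fun v => - tanh (a + v) ^ 2) p q);
      try lra.
    + intros; now apply derivable_pt_lim_opp.
    + intros z _. pose proof (pow2_ge_0 (tanh (a + z))). lra.
  - split; [apply Rmin_l | apply Rmax_l].
  - split; [apply Rmin_r | apply Rmax_r].
Qed.

(** * Exponentiated gradient on two experts *)

Definition eg_potential (e s : R) : R := ln (cosh (e * s)) / e.

Lemma eg_potential_le_rate e' e s : 0 < e' -> e' <= e -> eg_potential e' s <= eg_potential e s.
Proof.
  intros He' Hee'. unfold eg_potential.
  assert (Hl : 0 <= e' / e <= 1) by (split; [apply Rdiv_le_0_compat | apply -> (Rdiv_le_1 e' e)]; lra).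
  pose proof (ln_cosh_scale (e' / e) (e * s) Hl) as H.
  replace (e' / e * (e * s)) with (e' * s) in H by (field; lra).
  apply Rle_div_l; [lra |].
  replace (ln (cosh (e * s)) / e * e') with (e' / e * ln (cosh (e * s))) by (field; lra).
  exact H.
Qed.

Lemma eg_potential_step e s g : 0 < e ->
  - g * tanh (e * s) <= eg_potential e s - eg_potential e (s + g) + e * g ^ 2 / 2.
Proof.
  intros He. unfold eg_potential. pose proof (ln_cosh_shift_le (e * s) (e * g)) as H.
  replace (e * s + e * g) with (e * (s + g)) in H by ring.
  apply (Rmult_le_reg_r e); [exact He |].
  replace ((ln (cosh (e * s)) / e - ln (cosh (e * (s + g))) / e + e * g ^ 2 / 2) * e)
    with (ln (cosh (e * s)) - ln (cosh (e * (s + g))) + e * e * g ^ 2 / 2) by (field; lra).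
  nra.
Qed.

Lemma Rabs_le_eg_potential e s : 0 < e -> Rabs s <= eg_potential e s + ln 2 / e.
Proof.
  intros He. unfold eg_potential. pose proof (Rabs_le_ln_cosh (e * s)) as H.
  rewrite Rabs_mult, (Rabs_pos_eq e) in H by lra.
  replace (ln (cosh (e * s)) / e + ln 2 / e) with ((ln (cosh (e * s)) + ln 2) / e) by (field; lra).
  apply Rle_div_r; lra.
Qed.

Lemma eg2_potential_le (eta g s : nat -> R) (T : nat) :
  (forall t, (1 <= t <= T)%nat -> 0 < eta t) ->
  (forall t, (1 <= t < T)%nat -> eta (S t) <= eta t) ->
  s 1%nat = 0 ->
  (forall t, (1 <= t <= T)%nat -> s (S t) = s t + g t) ->
  forall K, (1 <= K <= T)%nat ->
  lsum (seq 1 K) (fun t => - g t * tanh (eta t * s t)) + eg_potential (eta K) (s (S K))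
    <= lsum (seq 1 K) (fun t => eta t * g t ^ 2 / 2).
Proof.
  intros Hpos Hmon Hs1 Hs [|k] HK; [lia |]. induction k as [|k IH].
  - pose proof (eg_potential_step (eta 1%nat) 0 (g 1%nat) (Hpos 1%nat ltac:(lia))) as H.
    unfold eg_potential at 1 in H. rewrite Rmult_0_r, ln_cosh_0, Rdiv_0_l, Rplus_0_l in H.
    change (seq 1 1) with [1%nat]. cbn [lsum fold_right].
    rewrite (Hs 1%nat), Hs1 by lia. rewrite Rplus_0_l, Rmult_0_r. lra.
  - rewrite !(lsum_seq_last 1 (S k)). replace (1 + S k)%nat with (S (S k)) by lia.
    specialize (IH ltac:(lia)).
    pose proof (eg_potential_step (eta (S (S k))) (s (S (S k))) (g (S (S k)))
      (Hpos (S (S k)) ltac:(lia))).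
    pose proof (eg_potential_le_rate (eta (S (S k))) (eta (S k)) (s (S (S k)))
      (Hpos (S (S k)) ltac:(lia)) (Hmon (S k) ltac:(lia))).
    rewrite (Hs (S (S k))) by lia. lra.
Qed.

(* Exponentiated gradient on the simplex of R^2 with cumulative gradient [s t] plays the weight
   difference [u2 - u1 = - tanh (eta t * s t)]; this is its regret against any [p = u2 - u1]. *)
Lemma eg2_regret (eta g s : nat -> R) (T : nat) (p : R) :
  (1 <= T)%nat ->
  (forall t, (1 <= t <= T)%nat -> 0 < eta t) ->
  (forall t, (1 <= t < T)%nat -> eta (S t) <= eta t) ->
  s 1%nat = 0 ->
  (forall t, (1 <= t <= T)%nat -> s (S t) = s t + g t) ->
  -1 <= p <= 1 ->
  lsum (seq 1 T) (fun t => g t * (- tanh (eta t * s t) - p))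
    <= ln 2 / eta T + lsum (seq 1 T) (fun t => eta t * g t ^ 2 / 2).
Proof.
  intros HT Hpos Hmon Hs1 Hs Hp.
  pose proof (eg2_potential_le eta g s T Hpos Hmon Hs1 Hs T ltac:(lia)).
  assert (Hsum : lsum (seq 1 T) g = s (S T))
    by (rewrite (lsum_telescope g s T), Hs1 by auto; ring).
  replace (lsum (seq 1 T) (fun t => g t * (- tanh (eta t * s t) - p)))
    with (lsum (seq 1 T) (fun t => - g t * tanh (eta t * s t)) - p * lsum (seq 1 T) g)
    by (rewrite <- lsum_scal_l, <- lsum_sub; apply lsum_ext; intros; ring).
  rewrite Hsum.
  pose proof (Rabs_le_eg_potential (eta T) (s (S T)) (Hpos T ltac:(lia))).
  assert (- p * s (S T) <= Rabs (s (S T))).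
  { destruct (Rle_dec 0 (s (S T))); [rewrite Rabs_pos_eq | rewrite Rabs_left]; nra. }
  lra.
Qed.

Lemma adaptive_rate_sum_le (c d : nat -> R) K :
  c 1%nat = 0 -> (forall t, (1 <= t <= K)%nat -> c (S t) = c t + d t) ->
  (forall t, d t = 0 \/ d t = 1) -> (forall t, (1 <= t)%nat -> 0 <= c t) ->
  lsum (seq 1 K) (fun t => d t / sqrt (1 + c t)) <= 2 * sqrt (c (S K)).
Proof.
  intros H1 Hs Hd Hc. induction K as [|K IH]; [cbn [seq lsum fold_right]; rewrite H1, sqrt_0; lra |].
  rewrite lsum_seq_last. replace (1 + K)%nat with (S K) by lia.
  specialize (IH (fun t Ht => Hs t ltac:(lia))).
  rewrite (Hs (S K)) by lia. assert (0 <= c (S K)) by (apply Hc; lia).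
  destruct (Hd (S K)) as [-> | ->]; [rewrite Rdiv_0_l, !Rplus_0_r; lra |].
  set (cc := c (S K)) in *.
  (* [1 / sqrt (1 + c) <= 2 (sqrt (1 + c) - sqrt c)] *)
  assert (0 < sqrt (1 + cc)) by (apply sqrt_lt_R0; lra).
  pose proof (sqrt_sqrt (1 + cc) ltac:(lra)). pose proof (sqrt_sqrt cc ltac:(lra)).
  pose proof (sqrt_pos cc).
  enough (2 * sqrt cc + 1 / sqrt (1 + cc) <= 2 * sqrt (cc + 1)) by lra.
  rewrite (Rplus_comm cc 1). apply (Rmult_le_reg_r (sqrt (1 + cc))); [lra |].
  rewrite Rmult_plus_distr_r. replace (1 / sqrt (1 + cc) * sqrt (1 + cc)) with 1 by (field; lra).
  nra.
Qed.

(** * Exponential weights for the square loss *)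

(* The tangent inequality behind exp-concavity: [p |-> exp (- eta (yv - p)^2)] is concave
   wherever [2 eta (yv - p)^2 <= 1]. *)
Lemma exp_neg_sq_below_tangent (eta r yv m z : R) :
  0 < eta -> 2 * eta * r ^ 2 <= 1 -> Rabs (yv - m) <= r -> Rabs (yv - z) <= r ->
  exp (- eta * (yv - z) ^ 2) <= exp (- eta * (yv - m) ^ 2) * (1 + 2 * eta * (yv - m) * (z - m)).
Proof.
  intros He Hr Hm Hz. apply Rabs_le_between in Hm, Hz.
  set (g := fun p => exp (- eta * (yv - p) ^ 2)).
  set (g' := fun p => 2 * eta * (yv - p) * g p).
  set (g'' := fun p => (4 * eta ^ 2 * (yv - p) ^ 2 - 2 * eta) * g p).
  assert (Hg : forall p, derivable_pt_lim g p (g' p)).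
  { intros p. apply is_derive_Reals. unfold g', g. auto_derive; auto.
    replace ((yv + - p) * ((yv + - p) * 1)) with ((yv - p) ^ 2) by ring. ring. }
  assert (Hg' : forall p, derivable_pt_lim g' p (g'' p)).
  { intros p. apply is_derive_Reals. unfold g'', g', g. auto_derive; auto.
    replace ((yv + - p) * ((yv + - p) * 1)) with ((yv - p) ^ 2) by ring. ring. }
  enough (g z <= g m + g' m * (z - m)) by (unfold g' in *; unfold g in *; lra).
  apply (concave_below_tangent g g' (yv - r) (yv + r)); [intros; apply Hg | | lra | lra].
  intros p q Hp Hpq Hq.
  apply (nonincreasing_of_derive_nonpos g' g'' (yv - r) (yv + r)); auto.
  intros v Hv. unfold g''. assert (0 < g v) by apply exp_pos.
  assert ((yv - v) ^ 2 <= r ^ 2) by (destruct Hv; nra).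
  assert (4 * eta ^ 2 * (yv - v) ^ 2 <= 2 * eta) by nra.
  nra.
Qed.

Lemma exp_sq_loss_mix_le (eta r yv : R) (l : list nat) (w f : nat -> R) :
  0 < eta -> 2 * eta * r ^ 2 <= 1 ->
  (forall k, In k l -> 0 <= w k) -> lsum l w = 1 ->
  (forall k, In k l -> Rabs (yv - f k) <= r) ->
  lsum l (fun k => w k * exp (- eta * (yv - f k) ^ 2))
    <= exp (- eta * (yv - lsum l (fun k => w k * f k)) ^ 2).
Proof.
  intros He Hr Hw Hw1 Hf.
  set (m := lsum l (fun k => w k * f k)).
  assert (Hconst : forall c, lsum l (fun k => w k * c) = c) by (intros; rewrite lsum_scal_r, Hw1; ring).
  assert (Hm : Rabs (yv - m) <= r).
  { enough (yv - r <= m <= yv + r) by (apply Rabs_le; lra).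
    rewrite <- (Hconst (yv - r)), <- (Hconst (yv + r)).
    split; apply lsum_le; intros k Hk; specialize (Hf k Hk); specialize (Hw k Hk);
      apply Rabs_le_between in Hf; nra. }
  set (gm := exp (- eta * (yv - m) ^ 2)).
  apply Rle_trans with (lsum l (fun k => w k * (gm * (1 + 2 * eta * (yv - m) * (f k - m))))).
  - apply lsum_le. intros k Hk. apply Rmult_le_compat_l; auto. apply (exp_neg_sq_below_tangent _ r); auto.
  - right. rewrite (lsum_ext _ _ (fun k => gm * w k + gm * 2 * eta * (yv - m) * (w k * f k - w k * m)))
      by (intros; ring).
    rewrite lsum_add, !lsum_scal_l, lsum_sub, Hw1, lsum_scal_r, Hw1. fold m. ring.
Qed.

(* The step hypothesis says that the total weight [sum_j exp (- eta * L j t)] of the experts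
   [0..N] shrinks at least by the factor [exp (- eta * lh t)] in round [t]. *)
Lemma exp_weights_regret (eta : R) (N T j0 : nat) (L : nat -> nat -> R) (lh : nat -> R) :
  0 < eta -> (j0 <= N)%nat -> (forall j, L j 1%nat = 0) ->
  (forall t, (1 <= t <= T)%nat ->
     lsum (seq 0 (N + 1)) (fun j => exp (- eta * L j (S t)))
       <= lsum (seq 0 (N + 1)) (fun j => exp (- eta * L j t)) * exp (- eta * lh t)) ->
  lsum (seq 1 T) lh <= L j0 (S T) + ln (INR N + 1) / eta.
Proof.
  intros He Hj0 HL1 Hstep.
  set (W := fun t => lsum (seq 0 (N + 1)) (fun j => exp (- eta * L j t))).
  assert (HW1 : W 1%nat = INR N + 1).
  { unfold W. rewrite (lsum_ext _ _ (fun _ => 1)).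
    - rewrite lsum_const, length_seq, plus_INR. simpl. ring.
    - intros j _. rewrite HL1, Rmult_0_r. apply exp_0. }
  assert (Hiter : forall K, (K <= T)%nat -> W (S K) <= W 1%nat * exp (- eta * lsum (seq 1 K) lh)).
  { induction K as [|K IH]; intros HK; [simpl; rewrite Rmult_0_r, exp_0; lra |].
    rewrite lsum_seq_last. replace (1 + K)%nat with (S K) by lia.
    rewrite Rmult_plus_distr_l, exp_plus, <- Rmult_assoc.
    eapply Rle_trans; [apply (Hstep (S K)); lia |].
    apply Rmult_le_compat_r; [left; apply exp_pos | apply IH; lia]. }
  assert (Hj0W : exp (- eta * L j0 (S T)) <= W (S T)).
  { apply (lsum_term_le _ (fun j => exp (- eta * L j (S T)))); [apply in_seq; lia |].
    intros; left; apply exp_pos. }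
  pose proof (Rle_trans _ _ _ Hj0W (Hiter T (le_n T))) as H. rewrite HW1 in H.
  assert (Hn : 0 < INR N + 1) by (pose proof (pos_INR N); lra).
  apply ln_le in H; [| apply exp_pos].
  rewrite ln_exp, ln_mult, ln_exp in H by (auto; apply exp_pos).
  apply (Rmult_le_reg_l eta); auto.
  replace (eta * (L j0 (S T) + ln (INR N + 1) / eta)) with (eta * L j0 (S T) + ln (INR N + 1))
    by (field; lra).
  lra.
Qed.

(** * Dyadic intervals *)

Lemma pow2_gt0 m : 0 < 2 ^ m.
Proof. apply pow_lt; lra. Qed.

Lemma INR_pow2 m : INR (2 ^ m) = 2 ^ m.
Proof. now rewrite pow_INR. Qed.

Section DyadicIntervals.

Variables (gamma : R) (NA : nat).
Hypothesis gamma_gt0 : 0 < gamma.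
Hypothesis NA_gamma : INR NA * gamma = 1.

Lemma inI_exists z : 0 <= z <= 1 -> exists a, (1 <= a <= NA)%nat /\ inI gamma NA a z.
Proof.
  intros Hz. destruct (Req_dec z 1) as [-> | Hz1].
  - exists NA. split; [| now right]. destruct NA; [simpl in NA_gamma; lra | lia].
  - assert (Hgen : forall N, z < INR N * gamma ->
      exists a, (1 <= a <= N)%nat /\ (INR a - 1) * gamma <= z < INR a * gamma).
    { induction N as [|N IH]; intros HN; [simpl in HN; lra |].
      destruct (Rlt_dec z (INR N * gamma)) as [Hl | Hl].
      - destruct (IH Hl) as [a [Ha Haz]]. exists a. split; [lia | exact Haz].
      - exists (S N). rewrite S_INR in *. split; [lia | lra]. }
    destruct (Hgen NA ltac:(lra)) as [a [Ha Haz]]. exists a. split; [exact Ha | now left].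
Qed.

Lemma inI_unique a a' z : (1 <= a <= NA)%nat -> (1 <= a' <= NA)%nat ->
  inI gamma NA a z -> inI gamma NA a' z -> a = a'.
Proof.
  assert (Hlt : forall p q, (p < q <= NA)%nat -> inI gamma NA p z -> inI gamma NA q z -> False).
  { intros p q Hpq Hp Hq.
    assert (INR p + 1 <= INR q) by (rewrite <- S_INR; apply le_INR; lia).
    assert (INR q <= INR NA) by (apply le_INR; lia).
    destruct Hp as [Hp | [-> Hp]]; destruct Hq as [Hq | [-> Hq]]; try lia; nra. }
  intros Ha Ha' H H'. destruct (Nat.lt_trichotomy a a') as [Hl | [Hl | Hl]]; auto;
    exfalso; [apply (Hlt a a') | apply (Hlt a' a)]; auto; lia.
Qed.

Lemma lsum_ind_inI z : 0 <= z <= 1 -> exists a0, (1 <= a0 <= NA)%nat /\ inI gamma NA a0 z /\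
  forall F : nat -> R, lsum (seq 1 NA) (fun a => ind (inI gamma NA a z) * F a) = F a0.
Proof.
  intros Hz. destruct (inI_exists z Hz) as [a0 [Ha0 HI]]. exists a0. do 2 (split; auto).
  intros F. rewrite (lsum_seq_single _ _ _ a0).
  - rewrite ind_true by auto. ring.
  - lia.
  - intros k Hk Hka0. rewrite ind_false; [ring |]. intros Hk'. apply Hka0.
    apply (inI_unique k a0 z); auto; lia.
Qed.

Lemma inSub_iff a m n z : inSub gamma NA a m n z <->
  inI gamma NA a z /\
  (INR a - 1) * gamma + (INR n - 1) * (gamma / 2 ^ m) <= z /\
  (z < (INR a - 1) * gamma + INR n * (gamma / 2 ^ m) \/
   (n = (2 ^ m)%nat /\ z = (INR a - 1) * gamma + INR n * (gamma / 2 ^ m))).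
Proof. unfold inSub. rewrite !Rmult_div_assoc. tauto. Qed.

Lemma inSub_unique a m n n' z : (1 <= n <= 2 ^ m)%nat -> (1 <= n' <= 2 ^ m)%nat ->
  inSub gamma NA a m n z -> inSub gamma NA a m n' z -> n = n'.
Proof.
  assert (Hlt : forall p q, (p < q <= 2 ^ m)%nat ->
    inSub gamma NA a m p z -> inSub gamma NA a m q z -> False).
  { intros p q Hpq Hp Hq. apply inSub_iff in Hp, Hq.
    assert (0 < gamma / 2 ^ m) by (apply Rdiv_lt_0_compat; [lra | apply pow2_gt0]).
    assert (INR p + 1 <= INR q) by (rewrite <- S_INR; apply le_INR; lia).
    assert (INR q <= 2 ^ m) by (rewrite <- INR_pow2; apply le_INR; lia).
    destruct Hp as [_ [_ [Hp | [-> _]]]]; [nra | lia]. }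
  intros Hn Hn' H H'. destruct (Nat.lt_trichotomy n n') as [Hl | [Hl | Hl]]; auto;
    exfalso; [apply (Hlt n n') | apply (Hlt n' n)]; auto; lia.
Qed.

Lemma inSub_exists a z : (1 <= a)%nat -> inI gamma NA a z ->
  forall m, exists n, (1 <= n <= 2 ^ m)%nat /\ inSub gamma NA a m n z.
Proof.
  intros Ha HI m. set (L := (INR a - 1) * gamma).
  induction m as [|m [n [Hn Hsub]]].
  - exists 1%nat. split; [simpl; lia |]. apply inSub_iff. simpl. rewrite Rdiv_1_r.
    split; [exact HI |]. unfold L.
    destruct HI as [HI | [-> ->]]; [lra | split; [nra | right; split; [auto | lra]]].
  - apply inSub_iff in Hsub. fold L in Hsub. destruct Hsub as [_ [H1 H2]].
    set (w := gamma / 2 ^ m) in *.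
    assert (Hw : gamma / 2 ^ S m = w / 2) by (unfold w; simpl; field; apply Rgt_not_eq, pow2_gt0).
    assert (0 < w) by (apply Rdiv_lt_0_compat; [lra | apply pow2_gt0]).
    assert (1 <= INR n) by (apply (le_INR 1); lia).
    rewrite Nat.pow_succ_r'.
    destruct (Rlt_dec z (L + (2 * INR n - 1) * (w / 2))) as [Hz | Hz].
    + exists (2 * n - 1)%nat. split; [lia |]. apply inSub_iff. fold L. rewrite Hw.
      rewrite minus_INR, mult_INR by lia. simpl INR.
      split; [exact HI | split; [lra | left; lra]].
    + exists (2 * n)%nat. split; [lia |]. apply inSub_iff. fold L. rewrite Hw, mult_INR.
      simpl INR. split; [exact HI | split; [lra |]].
      destruct H2 as [H2 | [-> H2]]; [left; lra | right; split; [rewrite Nat.pow_succ_r'; lia | lra]].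
Qed.

Lemma Rabs_lsum_ind_inSub_le a m z (F : nat -> R) c :
  (forall n, Rabs (F n) <= c) -> 0 <= c ->
  Rabs (lsum (seq 1 (2 ^ m)) (fun n => F n * ind (inSub gamma NA a m n z))) <= c.
Proof.
  intros HF Hc.
  destruct (classic (exists n, (1 <= n <= 2 ^ m)%nat /\ inSub gamma NA a m n z))
    as [[n [Hn Hsub]] | Hno].
  - rewrite (lsum_seq_single _ _ _ n).
    + rewrite ind_true, Rmult_1_r by exact Hsub. apply HF.
    + lia.
    + intros k Hk Hkn. rewrite ind_false; [ring |]. intros Hk'. apply Hkn.
      apply (inSub_unique a m k n z); auto; lia.
  - rewrite lsum_eq0, Rabs_R0; [exact Hc |]. intros k Hk. apply in_seq in Hk.
    rewrite ind_false; [ring |]. intros Hk'. apply Hno. exists k. split; [lia | exact Hk'].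
Qed.

Definition dyadic_center (a m n : nat) : R := (INR a - 1) * gamma + (INR n - 1 / 2) * (gamma / 2 ^ m).

Lemma inSub_center_dist a m n z : inSub gamma NA a m n z ->
  Rabs (z - dyadic_center a m n) <= gamma / 2 ^ m / 2.
Proof.
  intros H. apply inSub_iff in H. destruct H as [_ [H1 H2]]. unfold dyadic_center.
  assert (0 < gamma / 2 ^ m) by (apply Rdiv_lt_0_compat; [lra | apply pow2_gt0]).
  apply Rabs_le_between. destruct H2 as [H2 | [_ H2]]; lra.
Qed.

Lemma dyadic_center_in_unit a m n : (1 <= a <= NA)%nat -> (1 <= n <= 2 ^ m)%nat ->
  0 <= dyadic_center a m n <= 1.
Proof.
  intros Ha Hn. unfold dyadic_center.
  assert (0 < gamma / 2 ^ m) by (apply Rdiv_lt_0_compat; [lra | apply pow2_gt0]).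
  assert (1 <= INR n) by (apply (le_INR 1); lia).
  assert (INR n <= 2 ^ m) by (rewrite <- INR_pow2; apply le_INR; lia).
  assert (2 ^ m * (gamma / 2 ^ m) = gamma) by (field; apply Rgt_not_eq, pow2_gt0).
  assert (1 <= INR a) by (apply (le_INR 1); lia).
  assert (INR a <= INR NA) by (apply le_INR; lia).
  split; nra.
Qed.

Lemma inSub_parent a m n z : (1 <= n <= 2 ^ S m)%nat -> inSub gamma NA a (S m) n z ->
  (1 <= (n + 1) / 2 <= 2 ^ m)%nat /\ inSub gamma NA a m ((n + 1) / 2) z /\
  Rabs (dyadic_center a (S m) n - dyadic_center a m ((n + 1) / 2)) <= gamma / 2 ^ S m / 2.
Proof.
  intros Hn H. rewrite Nat.pow_succ_r' in Hn. unfold dyadic_center.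
  set (w := gamma / 2 ^ S m).
  assert (Hw : gamma / 2 ^ m = 2 * w) by (unfold w; simpl; field; apply Rgt_not_eq, pow2_gt0).
  assert (0 < w) by (apply Rdiv_lt_0_compat; [lra | apply pow2_gt0]).
  apply inSub_iff in H. fold w in H. destruct H as [HI [H1 H2]].
  destruct (Nat.Even_or_Odd n) as [[k ->] | [k ->]].
  - replace ((2 * k + 1) / 2)%nat with k by (apply (Nat.div_unique _ _ _ 1); lia).
    rewrite mult_INR in *. simpl (INR 2) in *.
    split; [lia | split].
    + apply inSub_iff. rewrite Hw. split; [exact HI | split; [lra |]].
      destruct H2 as [H2 | [H2a H2b]]; [left; lra |].
      right. split; [rewrite Nat.pow_succ_r' in H2a; lia | lra].
    + rewrite Hw. apply Rabs_le_between. lra.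
  - replace ((2 * k + 1 + 1) / 2)%nat with (k + 1)%nat
      by (apply (Nat.div_unique _ _ _ 0); lia).
    destruct H2 as [H2 | [H2a _]]; [| rewrite Nat.pow_succ_r' in H2a; lia].
    rewrite !plus_INR, mult_INR in *. simpl (INR 2) in *. simpl (INR 1) in *.
    split; [lia | split].
    + apply inSub_iff. rewrite Hw, plus_INR. simpl (INR 1).
      split; [exact HI | split; [lra | left; lra]].
    + rewrite Hw. apply Rabs_le_between. lra.
Qed.

End DyadicIntervals.

(** * The AMEG instances *)

Definition dyadic_step (gamma : R) (m : nat) : R := gamma / 2 ^ (m - 1).

Lemma dyadic_step_gt0 gamma m : 0 < gamma -> 0 < dyadic_step gamma m.
Proof. intros Hg. apply Rdiv_lt_0_compat; [exact Hg | apply pow2_gt0]. Qed.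

Lemma lsum_dyadic_step_le gamma K : 0 < gamma ->
  lsum (seq 1 K) (fun m => dyadic_step gamma m) <= 2 * gamma.
Proof.
  intros Hg. enough (lsum (seq 1 K) (fun m => dyadic_step gamma m) = 2 * gamma - 2 * gamma / 2 ^ K)
    by (assert (0 < 2 * gamma / 2 ^ K) by (apply Rdiv_lt_0_compat; [lra | apply pow2_gt0]); lra).
  induction K as [|K IH]; [simpl; field |].
  rewrite lsum_seq_last, IH. unfold dyadic_step. replace (1 + K - 1)%nat with K by lia.
  pose proof (pow2_gt0 K). simpl pow. field. lra.
Qed.

Lemma Gbound_gt0 B gamma m : 0 < B -> 0 < gamma -> 0 < Gbound B gamma m.
Proof. intros. unfold Gbound. apply Rdiv_lt_0_compat; [nra | apply pow2_gt0]. Qed.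

Lemma Gbound_dyadic_step B gamma m : (1 <= m)%nat -> Gbound B gamma m = 8 * B * dyadic_step gamma m.
Proof.
  intros Hm. unfold Gbound, dyadic_step. destruct m as [|m]; [lia |].
  replace (S m - 1)%nat with m by lia. pose proof (pow2_gt0 m). simpl pow. field. lra.
Qed.

Section Algorithm.

Variables (B gamma : R) (M NA : nat) (x y : nat -> R).
Hypothesis gamma_gt0 : 0 < gamma.

Definition level_term (u : point) (a m : nat) (z : R) : R :=
  lsum (seq 1 (2 ^ m))
    (fun n => (u m n 2%nat - u m n 1%nat) * dyadic_step gamma m * ind (inSub gamma NA a m n z)).

Lemma fpar_levels j u a z :
  fpar B gamma M NA j u a z = - B + INR j * gamma + lsum (seq 1 M) (fun m => level_term u a m z).
Proof.
  unfold fpar, level_term, dyadic_step. f_equal.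
  apply lsum_ext; intros. apply lsum_ext; intros. unfold Rdiv. ring.
Qed.

Lemma Rabs_level_term_le (u : point) a m z : (forall n, Rabs (u m n 2%nat - u m n 1%nat) <= 1) ->
  Rabs (level_term u a m z) <= dyadic_step gamma m.
Proof.
  intros Hu. pose proof (dyadic_step_gt0 gamma m gamma_gt0).
  apply (Rabs_lsum_ind_inSub_le gamma NA gamma_gt0); [| lra]. intros n.
  rewrite Rabs_mult, (Rabs_pos_eq (dyadic_step gamma m)) by lra.
  specialize (Hu n). nra.
Qed.

Lemma Rabs_fpar_sub_base_le j u a z : (forall m n, Rabs (u m n 2%nat - u m n 1%nat) <= 1) ->
  Rabs (fpar B gamma M NA j u a z - (- B + INR j * gamma)) <= 2 * gamma.
Proof.
  intros Hu. rewrite fpar_levels.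
  replace (- B + INR j * gamma + lsum (seq 1 M) (fun m => level_term u a m z) - (- B + INR j * gamma))
    with (lsum (seq 1 M) (fun m => level_term u a m z)) by ring.
  eapply Rle_trans; [apply Rabs_lsum_le |].
  eapply Rle_trans; [| apply (lsum_dyadic_step_le gamma M gamma_gt0)].
  apply lsum_le. intros; now apply Rabs_level_term_le.
Qed.

Definition coord_sign (i : nat) : R := if Nat.eqb i 2 then 1 else if Nat.eqb i 1 then -1 else 0.

Lemma upd_diff_sub u m n i v m' n' :
  (upd u m n i v m' n' 2%nat - upd u m n i v m' n' 1%nat) - (u m' n' 2%nat - u m' n' 1%nat)
    = if (Nat.eqb m' m && Nat.eqb n' n)%bool then (v - u m n i) * coord_sign i else 0.
Proof.
  unfold upd, coord_sign.
  destruct (Nat.eqb_spec m' m), (Nat.eqb_spec n' n); simpl; try ring. subst.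
  destruct i as [|[|[|i]]]; simpl; ring.
Qed.

Lemma fpar_upd j u a z m n i v :
  fpar B gamma M NA j (upd u m n i v) a z = fpar B gamma M NA j u a z +
   (if excluded_middle_informative ((1 <= m <= M)%nat /\ (1 <= n <= 2 ^ m)%nat)
    then (v - u m n i) * coord_sign i * dyadic_step gamma m * ind (inSub gamma NA a m n z) else 0).
Proof.
  rewrite !fpar_levels.
  enough (lsum (seq 1 M) (fun m' => level_term (upd u m n i v) a m' z - level_term u a m' z) =
     (if excluded_middle_informative ((1 <= m <= M)%nat /\ (1 <= n <= 2 ^ m)%nat)
      then (v - u m n i) * coord_sign i * dyadic_step gamma m * ind (inSub gamma NA a m n z) else 0))
    as H by (rewrite lsum_sub in H; lra).
  rewrite (lsum_ext _ _ (fun m' => lsum (seq 1 (2 ^ m')) (fun n' =>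
    (if (Nat.eqb m' m && Nat.eqb n' n)%bool then (v - u m n i) * coord_sign i else 0)
    * dyadic_step gamma m' * ind (inSub gamma NA a m' n' z)))).
  2: { intros m' _. unfold level_term. rewrite <- lsum_sub. apply lsum_ext. intros n' _.
       rewrite <- upd_diff_sub. ring. }
  destruct excluded_middle_informative as [[Hm Hn] | Hno].
  - rewrite (lsum_seq_single _ _ _ m); [| lia |].
    + rewrite (lsum_seq_single _ _ _ n); [rewrite !Nat.eqb_refl; simpl; ring | lia |].
      intros k _ Hk. apply Nat.eqb_neq in Hk. rewrite Nat.eqb_refl, Hk. simpl. ring.
    + intros k _ Hk. apply lsum_eq0. intros k' _. apply Nat.eqb_neq in Hk. rewrite Hk. simpl. ring.
  - apply lsum_eq0. intros m' Hm'. apply lsum_eq0. intros n' Hn'. apply in_seq in Hm', Hn'.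
    destruct (Nat.eqb_spec m' m), (Nat.eqb_spec n' n); simpl; try ring.
    subst. exfalso. apply Hno. split; lia.
Qed.

Definition block_grad (a j t : nat) (u : point) (m n : nat) : R :=
  -2 * (y t - fpar B gamma M NA j u a (x t)) * dyadic_step gamma m * ind (inSub gamma NA a m n (x t)).

Lemma partial_eq a j t u m n i :
  partial B gamma M NA x y a j t u m n i =
  if excluded_middle_informative ((1 <= m <= M)%nat /\ (1 <= n <= 2 ^ m)%nat)
  then coord_sign i * block_grad a j t u m n else 0.
Proof.
  unfold partial, loss.
  set (K := fpar B gamma M NA j u a (x t)).
  set (d := if excluded_middle_informative ((1 <= m <= M)%nat /\ (1 <= n <= 2 ^ m)%nat)
            then coord_sign i * dyadic_step gamma m * ind (inSub gamma NA a m n (x t)) else 0).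
  rewrite (Derive_ext _ (fun v => (y t - (K + (v - u m n i) * d)) ^ 2)).
  2: { intros v. rewrite fpar_upd. fold K. unfold d. destruct excluded_middle_informative; ring. }
  rewrite (is_derive_unique _ _ (-2 * (y t - K) * d)) by (auto_derive; auto; ring).
  unfold d, block_grad. fold K. destruct excluded_middle_informative; ring.
Qed.

Lemma partial_1_opp a j t u m n :
  partial B gamma M NA x y a j t u m n 1%nat = - partial B gamma M NA x y a j t u m n 2%nat.
Proof. rewrite !partial_eq. unfold coord_sign. simpl. destruct excluded_middle_informative; ring. Qed.

Lemma partial_2_eq a j t u m n : (1 <= m <= M)%nat -> (1 <= n <= 2 ^ m)%nat ->
  partial B gamma M NA x y a j t u m n 2%nat = block_grad a j t u m n.
Proof.
  intros. rewrite partial_eq. unfold coord_sign. simpl.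
  destruct excluded_middle_informative; [ring | tauto].
Qed.

Lemma active_inSub a j t m n :
  active B gamma M NA x y a j t m n -> inSub gamma NA a m n (x t).
Proof.
  intros [u [_ [i [_ Hp]]]]. rewrite partial_eq in Hp.
  destruct excluded_middle_informative; [| lra].
  destruct (classic (inSub gamma NA a m n (x t))) as [H | H]; auto.
  unfold block_grad in Hp. rewrite ind_false in Hp by auto. lra.
Qed.

Lemma cumgrad_1_opp a j t m n :
  cumgrad B gamma M NA x y a j t m n 1%nat = - cumgrad B gamma M NA x y a j t m n 2%nat.
Proof.
  induction t as [|t IH]; simpl; [ring |].
  rewrite IH, partial_1_opp. destruct excluded_middle_informative; ring.
Qed.

Lemma uhat_eq a j t m n i :
  uhat B gamma M NA x y a j t m n i =
  exp (- eta_blk B gamma M NA x y a j t m n * cumgrad B gamma M NA x y a j t m n i) /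
  (2 * cosh (eta_blk B gamma M NA x y a j t m n * cumgrad B gamma M NA x y a j t m n 2%nat)).
Proof.
  unfold uhat, wts, cosh. rewrite cumgrad_1_opp. f_equal.
  rewrite Rmult_opp_opp, <- Ropp_mult_distr_l. field.
Qed.

Lemma uhat_Dom a j t : Dom M (uhat B gamma M NA x y a j t).
Proof.
  intros m n _ _. rewrite !uhat_eq, cumgrad_1_opp, Rmult_opp_opp, <- Ropp_mult_distr_l.
  set (g := eta_blk _ _ _ _ _ _ _ _ _ _ _ * _).
  pose proof (cosh_gt0 g). pose proof (exp_pos (- g)). pose proof (exp_pos g).
  unfold cosh in *. split; [| split]; [apply Rdiv_le_0_compat; lra .. | field; lra].
Qed.

(* Since the two cumulative gradients are opposite, the weight gap is a [tanh]. *)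
Lemma uhat_gap a j t m n :
  uhat B gamma M NA x y a j t m n 2%nat - uhat B gamma M NA x y a j t m n 1%nat =
  - tanh (eta_blk B gamma M NA x y a j t m n * cumgrad B gamma M NA x y a j t m n 2%nat).
Proof.
  rewrite !uhat_eq, cumgrad_1_opp, Rmult_opp_opp, <- Ropp_mult_distr_l.
  set (g := eta_blk _ _ _ _ _ _ _ _ _ _ _ * _).
  pose proof (cosh_gt0 g). unfold tanh, sinh. field. lra.
Qed.

Lemma Rabs_uhat_gap_le a j t m n :
  Rabs (uhat B gamma M NA x y a j t m n 2%nat - uhat B gamma M NA x y a j t m n 1%nat) <= 1.
Proof. rewrite uhat_gap, Rabs_Ropp. apply Rabs_le, tanh_bounds. Qed.

Lemma Rabs_fhat_sub_base_le a j t z :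
  Rabs (fhat B gamma M NA x y a j t z - (- B + INR j * gamma)) <= 2 * gamma.
Proof. apply Rabs_fpar_sub_base_le. intros; apply Rabs_uhat_gap_le. Qed.

End Algorithm.

(** * Regret of one AMEG instance *)

Lemma ln2_gt0 : 0 < ln 2.
Proof. pose proof ln_lt_2. lra. Qed.

Lemma ln2_le1 : ln 2 <= 1.
Proof. rewrite <- ln_exp. apply ln_le; [lra |]. pose proof (exp_ineq1 1). lra. Qed.

Section InstanceRegret.

Variables (B gamma : R) (M NA : nat) (x y : nat -> R) (T a j : nat).
Hypothesis B_gt0 : 0 < B.
Hypothesis gamma_gt0 : 0 < gamma.
Hypothesis gamma_le_B : gamma <= B.
Hypothesis y_bound : forall t, (1 <= t <= T)%nat -> Rabs (y t) <= B.
Hypothesis base_range : 0 <= INR j * gamma <= 2 * B.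

Local Notation F := (fpar B gamma M NA j).
Local Notation U := (uhat B gamma M NA x y a j).
Local Notation eta := (eta_blk B gamma M NA x y a j).

Lemma sq_loss_sub_le_linear t (v : point) :
  (y t - F (U t) a (x t)) ^ 2 - (y t - F v a (x t)) ^ 2 <=
  lsum (seq 1 M) (fun m => lsum (seq 1 (2 ^ m)) (fun n =>
    block_grad B gamma M NA x y a j t (U t) m n *
    ((U t m n 2%nat - U t m n 1%nat) - (v m n 2%nat - v m n 1%nat)))).
Proof.
  set (Fu := F (U t) a (x t)). set (Fv := F v a (x t)).
  enough (lsum (seq 1 M) (fun m => lsum (seq 1 (2 ^ m)) (fun n =>
    block_grad B gamma M NA x y a j t (U t) m n *
    ((U t m n 2%nat - U t m n 1%nat) - (v m n 2%nat - v m n 1%nat)))) = -2 * (y t - Fu) * (Fu - Fv))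
    as -> by (pose proof (pow2_ge_0 (Fu - Fv)); nra).
  replace (Fu - Fv) with (lsum (seq 1 M)
    (fun m => level_term gamma NA (U t) a m (x t) - level_term gamma NA v a m (x t)))
    by (unfold Fu, Fv; rewrite !fpar_levels, lsum_sub; ring).
  rewrite <- lsum_scal_l. apply lsum_ext. intros m _.
  unfold level_term. rewrite <- lsum_sub, <- lsum_scal_l. apply lsum_ext. intros n _.
  unfold block_grad. fold Fu. ring.
Qed.

Lemma Rabs_block_grad_le t m n : (1 <= t <= T)%nat -> (1 <= m)%nat ->
  Rabs (block_grad B gamma M NA x y a j t (U t) m n) <= Gbound B gamma m.
Proof.
  intros Ht Hm. rewrite Gbound_dyadic_step by exact Hm. unfold block_grad.
  pose proof (Rabs_fhat_sub_base_le B gamma M NA x y gamma_gt0 a j t (x t)) as Hf.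
  unfold fhat in Hf. pose proof (y_bound t Ht) as Hy.
  apply Rabs_le_between in Hf, Hy.
  assert (Hres : Rabs (y t - F (U t) a (x t)) <= 4 * B) by (apply Rabs_le; lra).
  pose proof (dyadic_step_gt0 gamma m gamma_gt0). pose proof (ind_bounds (inSub gamma NA a m n (x t))).
  rewrite !Rabs_mult, (Rabs_pos_eq (dyadic_step gamma m)), (Rabs_pos_eq (ind _)) by lra.
  replace (Rabs (-2)) with 2 by (rewrite Rabs_left; lra).
  pose proof (Rabs_pos (y t - F (U t) a (x t))).
  apply Rle_trans with (2 * Rabs (y t - F (U t) a (x t)) * dyadic_step gamma m); [| nra].
  rewrite <- (Rmult_1_r (2 * _ * _)) at 2. apply Rmult_le_compat_l; nra.
Qed.

Definition active_ind (t m n : nat) : R := ind (inI gamma NA a (x t) /\ active B gamma M NA x y a j t m n).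
Definition active_count (t m n : nat) : R := lsum (seq 1 (t - 1)) (fun s => active_ind s m n).

Lemma eta_blk_eq t m n : eta t m n = / Gbound B gamma m * sqrt (ln 2 / (1 + active_count t m n)).
Proof. reflexivity. Qed.

Lemma active_count_ge0 t m n : 0 <= active_count t m n.
Proof. apply lsum_ge0. intros; apply ind_bounds. Qed.

Lemma active_count_S t m n : (1 <= t)%nat -> active_count (S t) m n = active_count t m n + active_ind t m n.
Proof.
  intros Ht. unfold active_count. replace (S t - 1)%nat with (S (t - 1)) by lia.
  rewrite lsum_seq_last. now replace (1 + (t - 1))%nat with t by lia.
Qed.

Lemma eta_blk_gt0 t m n : 0 < eta t m n.
Proof.
  rewrite eta_blk_eq. pose proof (active_count_ge0 t m n). pose proof ln2_gt0.
  apply Rmult_lt_0_compat; [apply Rinv_0_lt_compat, Gbound_gt0; auto |].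
  apply sqrt_lt_R0, Rdiv_lt_0_compat; lra.
Qed.

Lemma eta_blk_S_le t m n : (1 <= t)%nat -> eta (S t) m n <= eta t m n.
Proof.
  intros Ht. rewrite !eta_blk_eq, active_count_S by exact Ht.
  pose proof (active_count_ge0 t m n). pose proof (ind_bounds (inI gamma NA a (x t) /\ active B gamma M NA x y a j t m n)).
  pose proof ln2_gt0. fold (active_ind t m n) in *.
  apply Rmult_le_compat_l; [left; apply Rinv_0_lt_compat, Gbound_gt0; auto |].
  apply sqrt_le_1_alt, Rmult_le_compat_l; [lra |]. apply Rinv_le_contravar; lra.
Qed.

Lemma ln2_div_eta_blk_le t m n : ln 2 / eta t m n <= Gbound B gamma m * sqrt (1 + active_count t m n).
Proof.
  rewrite eta_blk_eq. set (G := Gbound B gamma m). set (c := active_count t m n).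
  assert (0 < G) by (apply Gbound_gt0; auto). assert (0 <= c) by apply active_count_ge0.
  pose proof ln2_gt0. pose proof ln2_le1.
  assert (Hsl : 0 < sqrt (ln 2)) by (apply sqrt_lt_R0; lra).
  assert (sqrt (ln 2) <= 1) by (rewrite <- sqrt_1; apply sqrt_le_1_alt; lra).
  assert (Hsc : 0 < sqrt (1 + c)) by (apply sqrt_lt_R0; lra).
  rewrite sqrt_div_alt by lra. rewrite <- (sqrt_sqrt (ln 2)) at 1 by lra.
  replace (sqrt (ln 2) * sqrt (ln 2) / (/ G * (sqrt (ln 2) / sqrt (1 + c))))
    with (G * sqrt (1 + c) * sqrt (ln 2)) by (field; lra).
  assert (0 < G * sqrt (1 + c)) by nra. nra.
Qed.

Definition fed_grad (t m n : nat) : R := ind (inI gamma NA a (x t)) * block_grad B gamma M NA x y a j t (U t) m n.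

Lemma fed_grad_sq_le t m n : (1 <= t <= T)%nat -> (1 <= m <= M)%nat -> (1 <= n <= 2 ^ m)%nat ->
  fed_grad t m n ^ 2 <= active_ind t m n * Gbound B gamma m ^ 2.
Proof.
  intros Ht Hm Hn. unfold active_ind, fed_grad.
  destruct (classic (inI gamma NA a (x t) /\ active B gamma M NA x y a j t m n)) as [[HI HA] | HA].
  - rewrite !ind_true by auto. rewrite !Rmult_1_l, <- !Rsqr_pow2. apply Rsqr_le_abs_1.
    rewrite (Rabs_pos_eq (Gbound _ _ _)) by (left; apply Gbound_gt0; auto).
    apply Rabs_block_grad_le; lia.
  - rewrite (ind_false _ HA), Rmult_0_l.
    destruct (classic (inI gamma NA a (x t))) as [HI | HI]; [| rewrite ind_false by auto; simpl; lra].
    enough (block_grad B gamma M NA x y a j t (U t) m n = 0) as -> by (simpl; lra).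
    destruct (Req_dec (block_grad B gamma M NA x y a j t (U t) m n) 0) as [E | E]; auto.
    exfalso. apply HA. split; auto. exists (U t). split; [apply uhat_Dom |].
    exists 2%nat. split; auto. now rewrite partial_2_eq.
Qed.

Lemma eta_blk_fed_grad_sq_le t m n : (1 <= t <= T)%nat -> (1 <= m <= M)%nat -> (1 <= n <= 2 ^ m)%nat ->
  eta t m n * fed_grad t m n ^ 2 <= Gbound B gamma m * (active_ind t m n / sqrt (1 + active_count t m n)).
Proof.
  intros Ht Hm Hn. pose proof (fed_grad_sq_le t m n Ht Hm Hn).
  rewrite eta_blk_eq. set (G := Gbound B gamma m) in *. set (c := active_count t m n).
  assert (0 < G) by (apply Gbound_gt0; auto). assert (0 <= c) by apply active_count_ge0.
  pose proof ln2_gt0. pose proof ln2_le1.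
  pose proof (ind_bounds (inI gamma NA a (x t) /\ active B gamma M NA x y a j t m n)).
  fold (active_ind t m n) in *.
  assert (Hsc : 0 < sqrt (1 + c)) by (apply sqrt_lt_R0; lra).
  assert (sqrt (ln 2) <= 1) by (rewrite <- sqrt_1; apply sqrt_le_1_alt; lra).
  pose proof (sqrt_pos (ln 2)).
  rewrite sqrt_div_alt by lra.
  apply Rle_trans with (/ G * (sqrt (ln 2) / sqrt (1 + c)) * (active_ind t m n * G ^ 2)).
  - apply Rmult_le_compat_l; [| exact H].
    apply Rmult_le_pos; [left; apply Rinv_0_lt_compat; lra | apply Rdiv_le_0_compat; lra].
  - replace (/ G * (sqrt (ln 2) / sqrt (1 + c)) * (active_ind t m n * G ^ 2))
      with (G * (active_ind t m n / sqrt (1 + c)) * sqrt (ln 2)) by (field; lra).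
    assert (0 <= G * (active_ind t m n / sqrt (1 + c))) by (apply Rmult_le_pos; [lra | apply Rdiv_le_0_compat; lra]).
    nra.
Qed.

Lemma block_regret_le m n (p : R) : (1 <= m <= M)%nat -> (1 <= n <= 2 ^ m)%nat -> (1 <= T)%nat ->
  -1 <= p <= 1 ->
  lsum (seq 1 T) (fun t => fed_grad t m n * ((U t m n 2%nat - U t m n 1%nat) - p)) <=
  2 * Gbound B gamma m * sqrt (1 + active_count (S T) m n).
Proof.
  intros Hm Hn HT Hp. set (G := Gbound B gamma m). assert (0 < G) by (apply Gbound_gt0; auto).
  set (C := fun t => cumgrad B gamma M NA x y a j t m n 2%nat).
  assert (Heg : lsum (seq 1 T) (fun t => fed_grad t m n * ((U t m n 2%nat - U t m n 1%nat) - p)) <=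
    ln 2 / eta T m n + lsum (seq 1 T) (fun t => eta t m n * fed_grad t m n ^ 2 / 2)).
  { rewrite (lsum_ext _ _ (fun t => fed_grad t m n * (- tanh (eta t m n * C t) - p)))
      by (intros; now rewrite uhat_gap).
    apply (eg2_regret (fun t => eta t m n)); auto.
    - intros; apply eta_blk_gt0.
    - intros; apply eta_blk_S_le; lia.
    - unfold C. simpl. destruct excluded_middle_informative; [lia | ring].
    - intros t Ht. unfold C. simpl cumgrad at 1.
      destruct excluded_middle_informative as [[_ HI] | HI]; unfold fed_grad.
      + rewrite ind_true, partial_2_eq by auto. unfold uhat. ring.
      + rewrite ind_false; [ring |]. intros HI'. apply HI. split; [lia | exact HI']. }
  assert (Hlast : ln 2 / eta T m n <= G * sqrt (1 + active_count (S T) m n)).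
  { eapply Rle_trans; [apply ln2_div_eta_blk_le |]. apply Rmult_le_compat_l; [lra |].
    apply sqrt_le_1_alt. rewrite active_count_S by lia.
    pose proof (ind_bounds (inI gamma NA a (x T) /\ active B gamma M NA x y a j T m n)).
    fold (active_ind T m n) in *. lra. }
  assert (Hsum : lsum (seq 1 T) (fun t => eta t m n * fed_grad t m n ^ 2 / 2) <=
    G / 2 * lsum (seq 1 T) (fun t => active_ind t m n / sqrt (1 + active_count t m n))).
  { rewrite <- lsum_scal_l. apply lsum_le. intros t Ht. apply in_seq in Ht.
    pose proof (eta_blk_fed_grad_sq_le t m n ltac:(lia) Hm Hn) as Hle. fold G in Hle. lra. }
  pose proof (adaptive_rate_sum_le (fun t => active_count t m n) (fun t => active_ind t m n) T
    eq_refl (fun t Ht => active_count_S t m n ltac:(lia)) (fun t => ind_0_or_1 _)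
    (fun t _ => active_count_ge0 t m n)).
  pose proof (active_count_ge0 (S T) m n).
  assert (sqrt (active_count (S T) m n) <= sqrt (1 + active_count (S T) m n)) by (apply sqrt_le_1_alt; lra).
  nra.
Qed.

Definition rounds_in_I : R := lsum (seq 1 T) (fun t => ind (inI gamma NA a (x t))).

Lemma lsum_active_count_le m :
  lsum (seq 1 (2 ^ m)) (fun n => active_count (S T) m n) <= rounds_in_I.
Proof.
  unfold active_count, rounds_in_I. replace (S T - 1)%nat with T by lia.
  rewrite lsum_comm. apply lsum_le. intros s _.
  apply Rle_trans with
    (lsum (seq 1 (2 ^ m)) (fun n => ind (inI gamma NA a (x s)) * ind (inSub gamma NA a m n (x s)))).
  - apply lsum_le. intros n _. unfold active_ind.
    destruct (classic (inI gamma NA a (x s) /\ active B gamma M NA x y a j s m n)) as [[HI HA] | H].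
    + apply (active_inSub B gamma M NA x y) in HA as Hsub.
      rewrite !ind_true by tauto. lra.
    + rewrite ind_false by exact H. apply Rmult_le_pos; apply ind_bounds.
  - rewrite lsum_scal_l. pose proof (ind_bounds (inI gamma NA a (x s))).
    pose proof (Rabs_lsum_ind_inSub_le gamma NA gamma_gt0 a m (x s) (fun _ => 1) 1
      ltac:(intros; cbv beta; rewrite Rabs_R1; lra) ltac:(lra)) as Hle.
    apply Rabs_le_between in Hle.
    rewrite (lsum_ext _ _ (fun n => 1 * ind (inSub gamma NA a m n (x s)))) by (intros; ring).
    nra.
Qed.

Lemma sqrt_add_le u v : 0 <= u -> 0 <= v -> sqrt (u + v) <= sqrt u + sqrt v.
Proof.
  intros Hu Hv. apply Rsqr_incr_0_var; [| pose proof (sqrt_pos u); pose proof (sqrt_pos v); lra].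
  rewrite Rsqr_sqrt by lra. unfold Rsqr.
  pose proof (sqrt_sqrt u Hu). pose proof (sqrt_sqrt v Hv).
  pose proof (sqrt_pos u). pose proof (sqrt_pos v). nra.
Qed.

Lemma lsum_sqrt_active_count_le m :
  lsum (seq 1 (2 ^ m)) (fun n => sqrt (1 + active_count (S T) m n)) <= 2 ^ m * (1 + sqrt rounds_in_I).
Proof.
  assert (0 <= rounds_in_I) by (apply lsum_ge0; intros; apply ind_bounds).
  assert (1 <= 2 ^ m) by (pose proof (pow_R1_Rle 2 m); lra).
  eapply Rle_trans.
  { apply lsum_sqrt_le. intros. pose proof (active_count_ge0 (S T) m k). lra. }
  rewrite length_seq, INR_pow2, lsum_add, lsum_const, length_seq, INR_pow2, Rmult_1_r.
  apply Rle_trans with (sqrt (2 ^ m * 2 ^ m + 2 ^ m * rounds_in_I)).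
  { apply sqrt_le_1_alt. rewrite Rmult_plus_distr_l.
    apply Rplus_le_compat_l, Rmult_le_compat_l; [lra | apply lsum_active_count_le]. }
  eapply Rle_trans; [apply sqrt_add_le; nra |].
  rewrite sqrt_square, sqrt_mult by lra.
  assert (sqrt (2 ^ m) <= 2 ^ m) by (rewrite <- (sqrt_square (2 ^ m)) at 2 by lra; apply sqrt_le_1_alt; nra).
  pose proof (sqrt_pos rounds_in_I). nra.
Qed.

Lemma instance_regret_le (v : point) : (1 <= T)%nat ->
  (forall m n, Rabs (v m n 2%nat - v m n 1%nat) <= 1) ->
  lsum (seq 1 T) (fun t =>
    ind (inI gamma NA a (x t)) * ((y t - F (U t) a (x t)) ^ 2 - (y t - F v a (x t)) ^ 2))
  <= 32 * B * gamma * INR M * (1 + sqrt rounds_in_I).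
Proof.
  intros HT Hv.
  apply Rle_trans with (lsum (seq 1 M) (fun m => lsum (seq 1 (2 ^ m)) (fun n =>
     lsum (seq 1 T) (fun t => fed_grad t m n * ((U t m n 2%nat - U t m n 1%nat) - (v m n 2%nat - v m n 1%nat)))))).
  { eapply Rle_trans.
    { apply lsum_le. intros t _. apply Rmult_le_compat_l; [apply ind_bounds | apply sq_loss_sub_le_linear]. }
    apply Req_le.
    rewrite (lsum_ext _ _ (fun t => lsum (seq 1 M) (fun m => lsum (seq 1 (2 ^ m)) (fun n =>
      fed_grad t m n * ((U t m n 2%nat - U t m n 1%nat) - (v m n 2%nat - v m n 1%nat)))))).
    - rewrite lsum_comm. apply lsum_ext. intros m _. apply lsum_comm.
    - intros t _. rewrite <- lsum_scal_l. apply lsum_ext. intros m _. rewrite <- lsum_scal_l.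
      apply lsum_ext. intros n _. unfold fed_grad. ring. }
  replace (32 * B * gamma * INR M * (1 + sqrt rounds_in_I))
    with (lsum (seq 1 M) (fun _ => 32 * B * gamma * (1 + sqrt rounds_in_I)))
    by (rewrite lsum_const, length_seq; ring).
  apply lsum_le. intros m Hm. apply in_seq in Hm.
  apply Rle_trans with
    (lsum (seq 1 (2 ^ m)) (fun n => 2 * Gbound B gamma m * sqrt (1 + active_count (S T) m n))).
  { apply lsum_le. intros n Hn. apply in_seq in Hn. apply block_regret_le; try lia.
    specialize (Hv m n). apply Rabs_le_between in Hv. lra. }
  rewrite lsum_scal_l. pose proof (lsum_sqrt_active_count_le m).
  assert (E : 2 * Gbound B gamma m * 2 ^ m = 32 * B * gamma)
    by (unfold Gbound; pose proof (pow2_gt0 m); field; lra).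
  assert (0 < Gbound B gamma m) by (apply Gbound_gt0; auto).
  rewrite <- E. nra.
Qed.

End InstanceRegret.

(** * Aggregation over the offsets *)

Section Aggregation.

Variables (B gamma : R) (M NA NJ : nat) (x y : nat -> R) (T a : nat).
Hypothesis B_gt0 : 0 < B.
Hypothesis fhat_residual : forall t j, (1 <= t <= T)%nat -> (j <= NJ)%nat ->
  Rabs (y t - fhat B gamma M NA x y a j t (x t)) <= 4 * B.

Local Notation L := (cumloss B gamma M NA x y a).
Local Notation W t := (lsum (seq 0 (NJ + 1)) (fun j => exp (- eta_agg B * L j t))).

Lemma eta_agg_gt0 : 0 < eta_agg B.
Proof. unfold eta_agg. apply Rdiv_lt_0_compat; [lra | nra]. Qed.

Lemma cumloss_S j t : (1 <= t)%nat ->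
  L j (S t) = L j t + ind (inI gamma NA a (x t)) * (y t - fhat B gamma M NA x y a j t (x t)) ^ 2.
Proof.
  intros Ht. unfold cumloss. replace (S t - 1)%nat with (S (t - 1)) by lia.
  rewrite lsum_seq_last. now replace (1 + (t - 1))%nat with t by lia.
Qed.

Lemma agg_weights_total_gt0 t : 0 < W t.
Proof.
  apply Rlt_le_trans with (exp (- eta_agg B * L 0%nat t)); [apply exp_pos |].
  apply (lsum_term_le _ (fun j => exp (- eta_agg B * L j t))); [apply in_seq; lia |].
  intros; left; apply exp_pos.
Qed.

Lemma lsum_what t : lsum (seq 0 (NJ + 1)) (fun j => what B gamma M NA NJ x y a j t) = 1.
Proof.
  unfold what. pose proof (agg_weights_total_gt0 t).
  rewrite (lsum_ext _ _ (fun j => / W t * exp (- eta_agg B * L j t))) by (intros; unfold Rdiv; ring).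
  rewrite lsum_scal_l. field. lra.
Qed.

(* Exp-concavity of the square loss with [eta_agg = 1 / (32 B^2)] on residuals bounded by [4 B]. *)
Lemma agg_weights_total_S t : (1 <= t <= T)%nat ->
  W (S t) <= W t * exp (- eta_agg B *
    (ind (inI gamma NA a (x t)) * (y t - fhat_a B gamma M NA NJ x y a t (x t)) ^ 2)).
Proof.
  intros Ht. pose proof (agg_weights_total_gt0 t).
  destruct (classic (inI gamma NA a (x t))) as [HI | HI].
  - rewrite ind_true, Rmult_1_l by exact HI.
    rewrite (lsum_ext _ _ (fun j => W t * (what B gamma M NA NJ x y a j t *
      exp (- eta_agg B * (y t - fhat B gamma M NA x y a j t (x t)) ^ 2)))).
    + rewrite lsum_scal_l. apply Rmult_le_compat_l; [lra |].
      apply (exp_sq_loss_mix_le _ (4 * B)); [apply eta_agg_gt0 | unfold eta_agg; right; field; lra | | apply lsum_what |].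
      * intros; unfold what; apply Rlt_le, Rdiv_lt_0_compat; [apply exp_pos | exact H].
      * intros k Hk. apply in_seq in Hk. apply fhat_residual; lia.
    + intros j _. rewrite cumloss_S, ind_true by (auto; lia). unfold what.
      rewrite Rmult_1_l, Rmult_plus_distr_l, exp_plus. field. lra.
  - rewrite ind_false, Rmult_0_l, Rmult_0_r, exp_0, Rmult_1_r by exact HI.
    right. apply lsum_ext. intros j _. rewrite cumloss_S, ind_false by (auto; lia).
    now rewrite Rmult_0_l, Rplus_0_r.
Qed.

Lemma aggregation_regret_le j0 : (j0 <= NJ)%nat ->
  lsum (seq 1 T) (fun t => ind (inI gamma NA a (x t)) * (y t - fhat_a B gamma M NA NJ x y a t (x t)) ^ 2)
  <= L j0 (S T) + 32 * B ^ 2 * ln (INR NJ + 1).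
Proof.
  intros Hj0. replace (32 * B ^ 2 * ln (INR NJ + 1)) with (ln (INR NJ + 1) / eta_agg B)
    by (unfold eta_agg; field; lra).
  apply exp_weights_regret; [apply eta_agg_gt0 | exact Hj0 | reflexivity | apply agg_weights_total_S].
Qed.

End Aggregation.

(** * Chaining *)

Definition clamp (r : R) : R := Rmax (-1) (Rmin 1 r).

Lemma Rabs_clamp_le r : Rabs (clamp r) <= 1.
Proof. unfold clamp. apply Rabs_le. split; [apply Rmax_l | apply Rmax_lub; [lra | apply Rmin_l]]. Qed.

Lemma clamp_id r : Rabs r <= 1 -> clamp r = r.
Proof.
  intros H. apply Rabs_le_between in H. unfold clamp.
  rewrite Rmin_right by lra. rewrite Rmax_right; lra.
Qed.

Lemma Rabs_div_le_1 r w : 0 < w -> Rabs r <= w -> Rabs (r / w) <= 1.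
Proof.
  intros Hw Hr. unfold Rdiv. rewrite Rabs_mult, Rabs_inv, (Rabs_pos_eq w) by lra.
  apply Rle_div_l; lra.
Qed.

Section Chaining.

Variables (B gamma : R) (M NA : nat) (f : R -> R) (a j0 : nat).
Hypothesis gamma_gt0 : 0 < gamma.
Hypothesis NA_gamma : INR NA * gamma = 1.
Hypothesis a_range : (1 <= a <= NA)%nat.
Hypothesis f_lipschitz : forall u v, 0 <= u <= 1 -> 0 <= v <= 1 -> Rabs (f u - f v) <= Rabs (u - v).

Local Notation center := (dyadic_center gamma a).
Local Notation base := (- B + INR j0 * gamma).
Hypothesis base_near : Rabs (f (center 0 1) - base) <= gamma / 2.

(* Level [m] of the chaining comparator moves from [f] at the center of the parent subinterval
   (from [base] when [m = 1]) to [f] at the center of the current one, in units of the jump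
   [gamma / 2^(m-1)] of block [(m, n)].  Clamping puts every block in the simplex; by the
   Lipschitz bound it is inactive on the blocks that matter. *)
Definition chain_incr (m n : nat) : R :=
  if Nat.eqb m 1 then (f (center 1 n) - base) / dyadic_step gamma 1
  else (f (center m n) - f (center (m - 1) ((n + 1) / 2))) / dyadic_step gamma m.

Definition chain_point : point := fun m n i =>
  if Nat.eqb i 2 then (1 + clamp (chain_incr m n)) / 2 else (1 - clamp (chain_incr m n)) / 2.

Lemma chain_point_gap m n : chain_point m n 2%nat - chain_point m n 1%nat = clamp (chain_incr m n).
Proof. unfold chain_point. simpl. field. Qed.

Lemma Rabs_chain_point_gap_le m n : Rabs (chain_point m n 2%nat - chain_point m n 1%nat) <= 1.
Proof. rewrite chain_point_gap. apply Rabs_clamp_le. Qed.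

Lemma Rabs_chain_incr_le m n z : (1 <= m)%nat -> (1 <= n <= 2 ^ m)%nat ->
  inSub gamma NA a m n z -> Rabs (chain_incr m n) <= 1.
Proof.
  intros Hm Hn H. destruct m as [|m]; [lia |].
  destruct (inSub_parent gamma NA gamma_gt0 a m n z Hn H) as [Hp [_ Hc]].
  pose proof (dyadic_center_in_unit gamma NA gamma_gt0 NA_gamma a (S m) n a_range Hn) as C1.
  pose proof (dyadic_center_in_unit gamma NA gamma_gt0 NA_gamma a m _ a_range Hp) as C2.
  pose proof (f_lipschitz _ _ C1 C2) as HL.
  assert (Hstep : dyadic_step gamma (S m) = gamma / 2 ^ m)
    by (unfold dyadic_step; now replace (S m - 1)%nat with m by lia).
  assert (0 < gamma / 2 ^ m) by (apply Rdiv_lt_0_compat; [lra | apply pow2_gt0]).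
  assert (Hhalf : gamma / 2 ^ S m / 2 <= gamma / 2 ^ m)
    by (replace (gamma / 2 ^ S m / 2) with (gamma / 2 ^ m / 4)
          by (simpl pow; field; apply Rgt_not_eq, pow2_gt0); lra).
  unfold chain_incr. destruct (Nat.eqb_spec (S m) 1) as [E | E].
  - injection E as ->. unfold dyadic_step. simpl pow in *. rewrite Rdiv_1_r.
    apply Rabs_div_le_1; [lra |].
    assert (Ep : ((n + 1) / 2)%nat = 1%nat)
      by (destruct Hp as [Hp1 Hp2]; simpl in Hp2; now apply Nat.le_antisymm). rewrite Ep in *.
    replace (f (center 1 n) - base) with ((f (center 1 n) - f (center 0 1)) + (f (center 0 1) - base))
      by ring.
    eapply Rle_trans; [apply Rabs_triang |]. lra.
  - replace (S m - 1)%nat with m by lia. rewrite Hstep. apply Rabs_div_le_1; lra.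
Qed.

Lemma level_term_chain_point m n z : (1 <= n <= 2 ^ m)%nat -> inSub gamma NA a m n z ->
  level_term gamma NA chain_point a m z = clamp (chain_incr m n) * dyadic_step gamma m.
Proof.
  intros Hn H. unfold level_term. rewrite (lsum_seq_single _ _ _ n).
  - rewrite ind_true, chain_point_gap by exact H. ring.
  - lia.
  - intros k Hk Hkn. rewrite ind_false; [ring |]. intros Hk'. apply Hkn.
    apply (inSub_unique gamma NA gamma_gt0 a m k n z); auto; lia.
Qed.

(* The increments of [chain_point] telescope along the subintervals containing [z]. *)
Lemma lsum_level_term_chain_point z K : inI gamma NA a z -> (1 <= K)%nat ->
  exists n, (1 <= n <= 2 ^ K)%nat /\ inSub gamma NA a K n z /\
  lsum (seq 1 K) (fun m => level_term gamma NA chain_point a m z) = f (center K n) - base.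
Proof.
  intros HI HK. destruct K as [|K]; [lia |]. clear HK.
  induction K as [|K [n [Hn [Hsub Hsum]]]].
  - destruct (inSub_exists gamma NA gamma_gt0 NA_gamma a z ltac:(lia) HI 1) as [n [Hn Hsub]].
    exists n. do 2 (split; auto). simpl.
    rewrite (level_term_chain_point 1 n z Hn Hsub), clamp_id by (apply (Rabs_chain_incr_le 1 n z); auto).
    unfold chain_incr. simpl. field. unfold dyadic_step. simpl. lra.
  - destruct (inSub_exists gamma NA gamma_gt0 NA_gamma a z ltac:(lia) HI (S (S K))) as [n' [Hn' Hsub']].
    destruct (inSub_parent gamma NA gamma_gt0 a (S K) n' z Hn' Hsub') as [Hp [Hq _]].
    assert (Epar : ((n' + 1) / 2)%nat = n) by (apply (inSub_unique gamma NA gamma_gt0 a (S K) _ n z); auto).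
    exists n'. do 2 (split; auto).
    rewrite lsum_seq_last, Hsum. replace (1 + S K)%nat with (S (S K)) by lia.
    rewrite (level_term_chain_point (S (S K)) n' z Hn' Hsub'),
      clamp_id by (apply (Rabs_chain_incr_le (S (S K)) n' z); auto; lia).
    unfold chain_incr. simpl Nat.eqb. replace (S (S K) - 1)%nat with (S K) by lia. rewrite Epar.
    field. apply Rgt_not_eq, dyadic_step_gt0, gamma_gt0.
Qed.

Lemma fpar_chain_point_approx z : inI gamma NA a z -> (1 <= M)%nat -> 0 <= z <= 1 ->
  Rabs (fpar B gamma M NA j0 chain_point a z - f z) <= gamma / 2 ^ M / 2.
Proof.
  intros HI HM Hz. rewrite fpar_levels.
  destruct (lsum_level_term_chain_point z M HI HM) as [n [Hn [Hsub ->]]].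
  replace (base + (f (center M n) - base) - f z) with (f (center M n) - f z) by ring.
  eapply Rle_trans; [apply f_lipschitz; auto; now apply (dyadic_center_in_unit gamma NA) |].
  rewrite Rabs_minus_sym. now apply (inSub_center_dist gamma NA).
Qed.

End Chaining.

(** * Regret against a Lipschitz function *)

Lemma nat_near (N : nat) (r : R) : 0 <= r <= INR N -> exists j, (j <= N)%nat /\ Rabs (r - INR j) <= 1 / 2.
Proof.
  induction N as [|N IH]; intros Hr.
  - exists 0%nat. split; auto. simpl in *. apply Rabs_le_between. lra.
  - rewrite S_INR in Hr. destruct (Rle_dec r (INR N)) as [H | H].
    + destruct (IH ltac:(lra)) as [j [Hj1 Hj2]]. exists j. split; auto.
    + destruct (Rle_dec r (INR N + 1 / 2)).
      * exists N. split; auto. apply Rabs_le_between. lra.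
      * exists (S N). split; auto. rewrite S_INR. apply Rabs_le_between. lra.
Qed.

Lemma sq_loss_sub_le_of_close (B y p q d : R) :
  Rabs (p - q) <= d -> Rabs (y - q) <= 2 * B -> d <= B ->
  (y - p) ^ 2 - (y - q) ^ 2 <= 5 * B * d.
Proof.
  intros Hpq Hyq Hd. apply Rabs_le_between in Hpq, Hyq.
  replace ((y - p) ^ 2 - (y - q) ^ 2) with ((q - p) * (2 * (y - q) + (q - p))) by ring.
  nra.
Qed.

Section Regret.

Variables (B gamma : R) (M NA NJ T : nat) (x y : nat -> R) (f : R -> R).
Hypothesis B_gt0 : 0 < B.
Hypothesis gamma_gt0 : 0 < gamma.
Hypothesis gamma_le_B : gamma <= B.
Hypothesis NA_gamma : INR NA * gamma = 1.
Hypothesis NJ_gamma : INR NJ * gamma = 2 * B.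
Hypothesis T_ge1 : (1 <= T)%nat.
Hypothesis M_ge1 : (1 <= M)%nat.
Hypothesis depth_fine : gamma / 2 ^ M <= B / INR T.
Hypothesis x_range : forall t, (1 <= t <= T)%nat -> 0 <= x t <= 1.
Hypothesis y_bound : forall t, (1 <= t <= T)%nat -> Rabs (y t) <= B.
Hypothesis f_range : forall u, 0 <= u <= 1 -> - B <= f u <= B.
Hypothesis f_lipschitz : forall u v, 0 <= u <= 1 -> 0 <= v <= 1 -> Rabs (f u - f v) <= Rabs (u - v).

Local Notation IA a t := (ind (inI gamma NA a (x t))).

Lemma base_range j : (j <= NJ)%nat -> 0 <= INR j * gamma <= 2 * B.
Proof.
  intros Hj. split; [apply Rmult_le_pos; [apply pos_INR | lra] |].
  rewrite <- NJ_gamma. apply Rmult_le_compat_r; [lra | now apply le_INR].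
Qed.

Lemma fhat_residual_le a j t : (1 <= t <= T)%nat -> (j <= NJ)%nat ->
  Rabs (y t - fhat B gamma M NA x y a j t (x t)) <= 4 * B.
Proof.
  intros Ht Hj. pose proof (Rabs_fhat_sub_base_le B gamma M NA x y gamma_gt0 a j t (x t)) as Hf.
  pose proof (base_range j Hj). pose proof (y_bound t Ht) as Hy.
  apply Rabs_le_between in Hf, Hy. apply Rabs_le_between. lra.
Qed.

Lemma base_index_exists a : (1 <= a <= NA)%nat -> exists j0, (j0 <= NJ)%nat /\
  Rabs (f (dyadic_center gamma a 0 1) - (- B + INR j0 * gamma)) <= gamma / 2.
Proof.
  intros Ha. set (c0 := dyadic_center gamma a 0 1).
  assert (Hc0 : 0 <= c0 <= 1) by (apply (dyadic_center_in_unit gamma NA); auto; simpl; lia).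
  pose proof (f_range c0 Hc0).
  destruct (nat_near NJ ((f c0 + B) / gamma)) as [j0 [Hj0 Hnear]].
  { split; [apply Rdiv_le_0_compat; lra | apply Rle_div_l; lra]. }
  exists j0. split; [exact Hj0 |].
  replace (f c0 - (- B + INR j0 * gamma)) with (gamma * ((f c0 + B) / gamma - INR j0)) by (field; lra).
  rewrite Rabs_mult, Rabs_pos_eq by lra. nra.
Qed.

Lemma chain_point_loss_sub_le a j0 t : (1 <= a <= NA)%nat -> (1 <= t <= T)%nat ->
  Rabs (f (dyadic_center gamma a 0 1) - (- B + INR j0 * gamma)) <= gamma / 2 ->
  IA a t * ((y t - fpar B gamma M NA j0 (chain_point B gamma f a j0) a (x t)) ^ 2 - (y t - f (x t)) ^ 2)
  <= IA a t * (3 * B ^ 2 / INR T).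
Proof.
  intros Ha Ht Hbase. assert (HT : 1 <= INR T) by (apply (le_INR 1); lia).
  destruct (classic (inI gamma NA a (x t))) as [HI | HI]; [| rewrite ind_false by auto; lra].
  rewrite ind_true, !Rmult_1_l by exact HI.
  pose proof (fpar_chain_point_approx B gamma M NA f a j0 gamma_gt0 NA_gamma Ha f_lipschitz Hbase
    (x t) HI M_ge1 (x_range t Ht)) as Happrox.
  assert (Hyf : Rabs (y t - f (x t)) <= 2 * B).
  { pose proof (y_bound t Ht). pose proof (f_range (x t) (x_range t Ht)).
    apply Rabs_le_between in H. apply Rabs_le. lra. }
  assert (B / INR T / 2 <= B) by (apply Rle_div_l; [lra |]; apply Rle_div_l; nra).
  eapply Rle_trans; [apply (sq_loss_sub_le_of_close B _ _ _ (B / INR T / 2)); auto; lra |].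
  apply Rle_div_r in depth_fine; [| lra].
  replace (5 * B * (B / INR T / 2)) with (5 / 2 * (B ^ 2 / INR T)) by (field; lra).
  replace (3 * B ^ 2 / INR T) with (3 * (B ^ 2 / INR T)) by (field; lra).
  assert (0 <= B ^ 2 / INR T) by (apply Rdiv_le_0_compat; nra). lra.
Qed.

Lemma interval_regret_le a : (1 <= a <= NA)%nat ->
  lsum (seq 1 T) (fun t =>
    IA a t * ((y t - fhat_a B gamma M NA NJ x y a t (x t)) ^ 2 - (y t - f (x t)) ^ 2))
  <= 32 * B ^ 2 * ln (INR NJ + 1) + 32 * B * gamma * INR M * (1 + sqrt (rounds_in_I gamma NA x T a))
     + lsum (seq 1 T) (fun t => IA a t * (3 * B ^ 2 / INR T)).
Proof.
  intros Ha. destruct (base_index_exists a Ha) as [j0 [Hj0 Hbase]].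
  set (v := chain_point B gamma f a j0).
  pose proof (aggregation_regret_le B gamma M NA NJ x y T a B_gt0
    (fun t j Ht Hj => fhat_residual_le a j t Ht Hj) j0 Hj0) as Hagg.
  unfold cumloss in Hagg. replace (S T - 1)%nat with T in Hagg by lia.
  pose proof (instance_regret_le B gamma M NA x y T a j0 B_gt0 gamma_gt0 gamma_le_B y_bound
    (base_range j0 Hj0) v T_ge1 (Rabs_chain_point_gap_le B gamma f a j0)) as Hinst.
  assert (Happrox : lsum (seq 1 T) (fun t =>
      IA a t * ((y t - fpar B gamma M NA j0 v a (x t)) ^ 2 - (y t - f (x t)) ^ 2))
      <= lsum (seq 1 T) (fun t => IA a t * (3 * B ^ 2 / INR T)))
    by (apply lsum_le; intros t Ht; apply in_seq in Ht; apply chain_point_loss_sub_le; auto; lia).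
  enough (lsum (seq 1 T) (fun t =>
    IA a t * ((y t - fhat_a B gamma M NA NJ x y a t (x t)) ^ 2 - (y t - f (x t)) ^ 2)) =
    lsum (seq 1 T) (fun t => IA a t * (y t - fhat_a B gamma M NA NJ x y a t (x t)) ^ 2)
    - lsum (seq 1 T) (fun t => IA a t * (y t - fhat B gamma M NA x y a j0 t (x t)) ^ 2)
    + lsum (seq 1 T) (fun t => IA a t * ((y t - fpar B gamma M NA j0 (uhat B gamma M NA x y a j0 t) a (x t)) ^ 2
                                         - (y t - fpar B gamma M NA j0 v a (x t)) ^ 2))
    + lsum (seq 1 T) (fun t => IA a t * ((y t - fpar B gamma M NA j0 v a (x t)) ^ 2 - (y t - f (x t)) ^ 2)))
    by lra.
  rewrite <- !lsum_sub, <- !lsum_add. apply lsum_ext. intros t _. unfold fhat. ring.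
Qed.

Lemma regret_le :
  lsum (seq 1 T) (fun t => (y t - yhat B gamma M NA NJ x y t) ^ 2) - lsum (seq 1 T) (fun t => (y t - f (x t)) ^ 2)
  <= INR NA * (32 * B ^ 2 * ln (INR NJ + 1))
     + 32 * B * gamma * INR M * (INR NA + sqrt (INR NA * INR T)) + 3 * B ^ 2.
Proof.
  assert (HT : 0 < INR T) by (apply (lt_INR 0); lia).
  assert (Hpart : forall t, (1 <= t <= T)%nat -> lsum (seq 1 NA) (fun a => IA a t) = 1).
  { intros t Ht. destruct (lsum_ind_inI gamma NA gamma_gt0 NA_gamma (x t) (x_range t Ht)) as [a0 [_ [_ HF]]].
    rewrite (lsum_ext _ _ (fun a => IA a t * 1)) by (intros; ring). apply HF. }
  rewrite <- lsum_sub.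
  rewrite (lsum_ext _ _ (fun t => lsum (seq 1 NA) (fun a =>
    IA a t * ((y t - fhat_a B gamma M NA NJ x y a t (x t)) ^ 2 - (y t - f (x t)) ^ 2)))).
  2: { intros t Ht. apply in_seq in Ht.
       destruct (lsum_ind_inI gamma NA gamma_gt0 NA_gamma (x t) (x_range t ltac:(lia))) as [a0 [_ [_ HF]]].
       rewrite HF. unfold yhat.
       rewrite (lsum_ext _ _ (fun a => IA a t * fhat_a B gamma M NA NJ x y a t (x t))) by (intros; ring).
       now rewrite HF. }
  rewrite lsum_comm.
  eapply Rle_trans; [apply lsum_le; intros a Ha; apply in_seq in Ha; apply interval_regret_le; lia |].
  rewrite !lsum_add, lsum_const, length_seq.
  rewrite (lsum_ext _ _ (fun a => 32 * B * gamma * INR M * 1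
    + 32 * B * gamma * INR M * sqrt (rounds_in_I gamma NA x T a))) by (intros; ring).
  rewrite lsum_add, lsum_const, length_seq, lsum_scal_l.
  assert (Hbias : lsum (seq 1 NA) (fun a => lsum (seq 1 T) (fun t => IA a t * (3 * B ^ 2 / INR T))) = 3 * B ^ 2).
  { rewrite lsum_comm, (lsum_ext _ _ (fun t => 3 * B ^ 2 / INR T)).
    - rewrite lsum_const, length_seq. field. lra.
    - intros t Ht. apply in_seq in Ht. rewrite lsum_scal_r, Hpart by lia. ring. }
  assert (Hsqrt : lsum (seq 1 NA) (fun a => sqrt (rounds_in_I gamma NA x T a)) <= sqrt (INR NA * INR T)).
  { eapply Rle_trans; [apply lsum_sqrt_le; intros; apply lsum_ge0; intros; apply ind_bounds |].
    rewrite length_seq. apply sqrt_le_1_alt, Rmult_le_compat_l; [apply pos_INR |].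
    unfold rounds_in_I. rewrite lsum_comm, (lsum_ext _ _ (fun _ => 1)).
    - rewrite lsum_const, length_seq. lra.
    - intros t Ht. apply in_seq in Ht. apply Hpart. lia. }
  assert (0 <= 32 * B * gamma * INR M) by (apply Rmult_le_pos; [nra | apply pos_INR]).
  nra.
Qed.

End Regret.

(** * Tuning *)

Lemma tuned_terms_le (B tau L NAr NJr Mr g sq : R) :
  0 < B -> 1 <= tau -> / 2 < L -> 0 < g ->
  NAr * g = 1 -> g = B / tau -> ln (NJr + 1) <= 3 * L -> 0 <= Mr -> Mr <= 4 * L ->
  g * sq = tau * sqrt B -> 0 <= sq ->
  NAr * (32 * B ^ 2 * ln (NJr + 1)) + 32 * B * g * Mr * (NAr + sq) + 3 * B ^ 2
  <= 400 * Rmax B (B ^ 2) * tau * L.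
Proof.
  intros HB Ht HL Hg HNA Hgd Hln HM0 HM Hsq Hsq0.
  set (K := Rmax B (B ^ 2)).
  assert (K1 : B <= K) by apply Rmax_l. assert (K2 : B ^ 2 <= K) by apply Rmax_r.
  assert (K3 : B * sqrt B <= K).
  { pose proof (sqrt_pos B). destruct (Rle_dec B 1).
    - assert (sqrt B <= 1) by (rewrite <- sqrt_1; apply sqrt_le_1_alt; lra). nra.
    - assert (sqrt B <= B) by (rewrite <- (sqrt_square B) at 2 by lra; apply sqrt_le_1_alt; nra).
      assert (B * sqrt B <= B * B) by (apply Rmult_le_compat_l; lra).
      replace (B ^ 2) with (B * B) in K2 by ring. lra. }
  assert (E1 : NAr * B = tau)
    by (rewrite Hgd in HNA; replace (NAr * B) with (NAr * (B / tau) * tau) by (field; lra);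
        rewrite HNA; ring).
  assert (T1 : NAr * (32 * B ^ 2 * ln (NJr + 1)) <= 96 * K * tau * L).
  { replace (NAr * (32 * B ^ 2 * ln (NJr + 1))) with (32 * (NAr * B) * B * ln (NJr + 1)) by ring.
    rewrite E1. assert (tau * B * ln (NJr + 1) <= tau * B * (3 * L)) by (apply Rmult_le_compat_l; nra).
    assert (tau * L * B <= tau * L * K) by (apply Rmult_le_compat_l; nra). nra. }
  assert (T2 : 32 * B * g * Mr * (NAr + sq) <= 256 * K * tau * L).
  { replace (32 * B * g * Mr * (NAr + sq)) with (32 * B * Mr * (NAr * g + g * sq)) by ring.
    rewrite HNA, Hsq. pose proof (sqrt_pos B).
    assert (B * Mr * (1 + tau * sqrt B) <= B * (4 * L) * (1 + tau * sqrt B))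
      by (apply Rmult_le_compat_r; [nra | apply Rmult_le_compat_l; lra]).
    assert (B * (1 + tau * sqrt B) <= 2 * tau * K).
    { assert (tau * (B * sqrt B) <= tau * K) by (apply Rmult_le_compat_l; lra). nra. }
    nra. }
  assert (T3 : 3 * B ^ 2 <= 6 * K * tau * L).
  { assert (B ^ 2 <= K * tau) by nra. assert (0 <= B ^ 2) by nra. nra. }
  assert (0 <= K * tau * L) by (apply Rmult_le_pos; [apply Rmult_le_pos |]; lra).
  lra.
Qed.

Lemma exp_le_compat u v : u <= v -> exp u <= exp v.
Proof. intros [H | ->]; [left; now apply exp_increasing | lra]. Qed.

Section Tuning.

Variables (B : R) (T M NA NJ : nat).
Hypothesis B_gt0 : 0 < B.
Hypothesis T_ge2 : (2 <= T)%nat.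

Local Notation tau := (Rpower (INR T) (1 / 3)).
Local Notation gamma := (B * Rpower (INR T) (- (1 / 3))).
Local Notation L := (ln (INR T)).

Hypothesis NA_eq : INR NA = 1 / gamma.
Hypothesis NJ_eq : INR NJ = 2 * B / gamma.
Hypothesis M_eq : INR M - 1 < ln (gamma * INR T / B) / ln 2 <= INR M.

Lemma INR_T_ge2 : 2 <= INR T.
Proof. apply (le_INR 2). exact T_ge2. Qed.

Lemma ln2_le_L : ln 2 <= L.
Proof. apply ln_le; [lra | apply INR_T_ge2]. Qed.

Lemma tau_ge1 : 1 <= tau.
Proof.
  unfold Rpower. rewrite <- exp_0 at 1. apply exp_le_compat.
  pose proof ln2_le_L. pose proof ln2_gt0. lra.
Qed.

Lemma tau_cube : tau * tau * tau = INR T.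
Proof.
  pose proof INR_T_ge2. rewrite <- !Rpower_plus.
  replace (1 / 3 + 1 / 3 + 1 / 3) with 1 by field. apply Rpower_1. lra.
Qed.

Lemma gamma_eq : gamma = B / tau.
Proof. rewrite Rpower_Ropp. reflexivity. Qed.

Lemma gamma_gt0 : 0 < gamma.
Proof. rewrite gamma_eq. pose proof tau_ge1. apply Rdiv_lt_0_compat; lra. Qed.

Lemma gamma_le_B : gamma <= B.
Proof. rewrite gamma_eq. pose proof tau_ge1. apply Rle_div_l; nra. Qed.

Lemma NA_gamma : INR NA * gamma = 1.
Proof. rewrite NA_eq. field. split; [apply Rgt_not_eq, exp_pos | lra]. Qed.

Lemma NJ_gamma : INR NJ * gamma = 2 * B.
Proof. rewrite NJ_eq. field. split; [apply Rgt_not_eq, exp_pos | lra]. Qed.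

Lemma ln_NJ_le : ln (INR NJ + 1) <= 3 * L.
Proof.
  assert (ENJ : INR NJ = 2 * tau) by (rewrite NJ_eq, gamma_eq; pose proof tau_ge1; field; lra).
  pose proof tau_ge1. pose proof ln2_le_L. pose proof ln2_gt0. rewrite ENJ.
  apply Rle_trans with (ln (3 * tau)); [apply ln_le; lra |].
  rewrite ln_mult, ln_Rpower by lra.
  assert (ln 3 <= 2 * ln 2)
    by (replace (2 * ln 2) with (ln (2 * 2)) by (rewrite ln_mult; lra); apply ln_le; lra).
  lra.
Qed.

Lemma ln_gamma_T : ln (gamma * INR T / B) = 2 / 3 * L.
Proof.
  pose proof tau_ge1. pose proof INR_T_ge2. rewrite gamma_eq.
  replace (B / tau * INR T / B) with (INR T / tau) by (field; lra).
  rewrite ln_div, ln_Rpower by lra. field.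
Qed.

Lemma M_bounds : (1 <= M)%nat /\ INR M <= 4 * L /\ 2 / 3 * L <= INR M * ln 2.
Proof.
  pose proof ln2_gt0. pose proof ln2_le_L. pose proof ln_lt_2.
  destruct M_eq as [HM1 HM2]. rewrite ln_gamma_T in HM1, HM2.
  assert (HLl : 1 <= L / ln 2) by (apply Rle_div_r; lra).
  assert (HLu : L / ln 2 <= 2 * L) by (apply Rle_div_l; nra).
  replace (2 / 3 * L / ln 2) with (2 / 3 * (L / ln 2)) in HM1, HM2 by (field; lra).
  split; [| split].
  - destruct M as [|m]; [simpl in HM2; lra | lia].
  - lra.
  - replace (2 / 3 * L) with (2 / 3 * (L / ln 2) * ln 2) by (field; lra).
    apply Rmult_le_compat_r; lra.
Qed.

Lemma depth_fine : gamma / 2 ^ M <= B / INR T.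
Proof.
  destruct M_bounds as [_ [_ HM]].
  assert (Htau2 : tau * tau <= 2 ^ M).
  { rewrite <- Rpower_plus, <- Rpower_pow by lra. unfold Rpower.
    apply exp_le_compat. replace (INR 2) with 2 by reflexivity. lra. }
  pose proof tau_ge1. pose proof tau_cube as Hc. rewrite gamma_eq.
  set (u := tau) in *. rewrite <- Hc.
  apply Rle_div_l; [apply pow2_gt0 |].
  replace (B / (u * u * u) * 2 ^ M) with (B / u * (2 ^ M / (u * u))) by (field; lra).
  rewrite <- (Rmult_1_r (B / u)) at 1.
  apply Rmult_le_compat_l; [apply Rdiv_le_0_compat; lra |].
  apply Rle_div_r; nra.
Qed.

Lemma gamma_sqrt_NA_T : gamma * sqrt (INR NA * INR T) = tau * sqrt B.
Proof.
  pose proof tau_ge1 as H. pose proof tau_cube as Hc. pose proof NA_gamma as HNA.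
  rewrite gamma_eq in HNA |- *. revert H Hc HNA. generalize tau. intros u H Hc HNA. rewrite <- Hc.
  assert (ENA : INR NA = u / B).
  { apply (Rmult_eq_reg_r (B / u)); [rewrite HNA; field; lra |].
    apply Rgt_not_eq, Rdiv_lt_0_compat; lra. }
  rewrite ENA. replace (u / B * (u * u * u)) with ((u * u) ^ 2 / B) by (field; lra).
  rewrite sqrt_div_alt, sqrt_pow2 by nra.
  assert (0 < sqrt B) by (apply sqrt_lt_R0; lra).
  rewrite <- (sqrt_sqrt B) at 1 by lra. field. lra.
Qed.

End Tuning.

Theorem theorem6 :
  exists c : R, 0 < c /\
  forall (B : R) (T : nat) (x y : nat -> R) (M NA NJ : nat),
    0 < B -> (2 <= T)%nat ->
    (forall t, (1 <= t <= T)%nat -> 0 <= x t <= 1) ->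
    (forall t, (1 <= t <= T)%nat -> Rabs (y t) <= B) ->
    (* tuning gamma = B T^{-1/3}; 1/gamma and 2B/gamma are integers *)
    INR NA = 1 / (B * Rpower (INR T) (- (1 / 3))) ->
    INR NJ = 2 * B / (B * Rpower (INR T) (- (1 / 3))) ->
    (* M = ceil(log_2(gamma T / B)) *)
    INR M - 1 < ln (B * Rpower (INR T) (- (1 / 3)) * INR T / B) / ln 2 <= INR M ->
    forall f : R -> R,
      (forall u, 0 <= u <= 1 -> - B <= f u <= B) ->
      (forall u v, 0 <= u <= 1 -> 0 <= v <= 1 -> Rabs (f u - f v) <= Rabs (u - v)) ->
      lsum (seq 1 T) (fun t =>
          (y t - yhat B (B * Rpower (INR T) (- (1 / 3))) M NA NJ x y t) ^ 2)
      - lsum (seq 1 T) (fun t => (y t - f (x t)) ^ 2)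
      <= c * Rmax B (B ^ 2) * Rpower (INR T) (1 / 3) * ln (INR T).
Proof.
  exists 400. split; [lra |].
  intros B T x y M NA NJ HB HT Hx Hy HNA HNJ HM f Hf Hlip.
  destruct (M_bounds B T M HB HT HM) as [HM1 [HM4 _]].
  eapply Rle_trans.
  { apply regret_le; auto; try lia.
    - now apply gamma_gt0.
    - now apply gamma_le_B.
    - now apply NA_gamma.
    - now apply NJ_gamma.
    - now apply depth_fine. }
  apply (tuned_terms_le _ _ _ _ _ _ _ _ HB (tau_ge1 T HT)).
  - pose proof ln_lt_2. pose proof (ln2_le_L T HT). lra.
  - now apply gamma_gt0.
  - now apply NA_gamma.
  - now rewrite Rpower_Ropp.
  - now apply (ln_NJ_le B).
  - apply pos_INR.
  - exact HM4.
  - now apply gamma_sqrt_NA_T.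
  - apply sqrt_pos.
Qed.
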